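(* Over all 3-periodics of $\mathcal{E}$, the triangle center $X_{100}^\dagger$ of the focus-inversive triangle moves on the circle with center and radius \[C_{100}^\dagger=\left(-c\left(1+\frac{\rho^2}{b^2}\right),0\right),\qquad R_{100}^\dagger=\rho^2\,\frac{a}{b^2}.\]
   Context: Let $a>b>0$ and let $\mathcal{E}$ be the ellipse $x^2/a^2+y^2/b^2=1$. Set $c=\sqrt{a^2-b^2}$, and let the foci be $f_1=(-c,0)$, $f_2=(c,0)$. A 3-periodic is a triangle $P_1P_2P_3$ with vertices on $\mathcal{E}$ such that at each vertex the normal to $\mathcal{E}$ bisects the angle formed by the two sides meeting at that vertex; these form a one-parameter family (one through every point of $\mathcal{E}$). Fix $\rho>0$; the focus-inversive triangle has vertices $P_i^\dagger=f_1+(\rho/d_{1,i})^2(P_i-f_1)$, $d_{1,i}=|P_i-f_1|$. $X_{100}$ is Kimberling's center $X_{100}$: the anticomplement of the Feuerbach point (the point of the circumcircle with barycentrics $a_s/(b_s-c_s):b_s/(c_s-a_s):c_s/(a_s-b_s)$, where $a_s,b_s,c_s$ are the side lengths). *)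

From HB Require Import structures.
From mathcomp Require Import all_boot all_order all_algebra.
Set Implicit Arguments. Unset Strict Implicit. Unset Printing Implicit Defensive.
Import Order.TTheory GRing.Theory Num.Theory.
Local Open Scope ring_scope.

Section Geo.
Variable R : rcfType.
Definition pt := (R * R)%type.

Definition padd (P Q : pt) : pt := (P.1 + Q.1, P.2 + Q.2).
Definition psub (P Q : pt) : pt := (P.1 - Q.1, P.2 - Q.2).
Definition pscale (k : R) (P : pt) : pt := (k * P.1, k * P.2).
Definition dot (P Q : pt) : R := P.1 * Q.1 + P.2 * Q.2.
Definition cross (P Q : pt) : R := P.1 * Q.2 - P.2 * Q.1.
Definition dist (P Q : pt) : R := Num.sqrt (dot (psub P Q) (psub P Q)).

Definition on_ellipse (a b : R) (P : pt) : Prop :=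
  P.1 ^+ 2 / a ^+ 2 + P.2 ^+ 2 / b ^+ 2 = 1.

Definition focal_c (a b : R) : R := Num.sqrt (a ^+ 2 - b ^+ 2).
Definition focus1 (a b : R) : pt := (- focal_c a b, 0).

(* At vertex P (with neighbours Q and S), the normal to the ellipse at P,
   direction (P.1/a^2, P.2/b^2), is along the internal angle bisector of the
   angle QPS, whose direction is the sum of the unit vectors from P to Q and
   from P to S. *)
Definition normal_bisects (a b : R) (Q P S : pt) : Prop :=
  let u := pscale (dist Q P)^-1 (psub Q P) in
  let w := pscale (dist S P)^-1 (psub S P) in
  cross (padd u w) (P.1 / a ^+ 2, P.2 / b ^+ 2) = 0.

Definition three_periodic (a b : R) (P1 P2 P3 : pt) : Prop :=
  [/\ on_ellipse a b P1, on_ellipse a b P2, on_ellipse a b P3,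
      [/\ P1 <> P2, P2 <> P3 & P3 <> P1] &
      [/\ normal_bisects a b P3 P1 P2, normal_bisects a b P1 P2 P3
        & normal_bisects a b P2 P3 P1]].

Definition focus_inv (a b rho : R) (P : pt) : pt :=
  let f1 := focus1 a b in
  padd f1 (pscale ((rho / dist P f1) ^+ 2) (psub P f1)).

Definition from_bary (A B C : pt) (u v w : R) : pt :=
  pscale (u + v + w)^-1 (padd (pscale u A) (padd (pscale v B) (pscale w C))).

Definition sideA (A B C : pt) : R := dist B C.
Definition sideB (A B C : pt) : R := dist C A.
Definition sideC (A B C : pt) : R := dist A B.

(* Kimberling's X_100, barycentrics a_s/(b_s-c_s) : b_s/(c_s-a_s) : c_s/(a_s-b_s)
   (meaningful when the side lengths are pairwise distinct). *)
Definition X100 (A B C : pt) : pt :=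
  let sa := sideA A B C in let sb := sideB A B C in let sc := sideC A B C in
  from_bary A B C (sa / (sb - sc)) (sb / (sc - sa)) (sc / (sa - sb)).

End Geo.

From HB Require Import structures.
From mathcomp Require Import all_boot all_order all_algebra.
From mathcomp Require Import ring lra.
Import Order.TTheory GRing.Theory Num.Theory.
Local Open Scope ring_scope.
Set Implicit Arguments. Unset Strict Implicit. Unset Printing Implicit Defensive.

(* Write G(P,Q) = ((P-Q).x^2/a^2 + (P-Q).y^2/b^2)/2 ("ell_sq").
   1. Reflection law: if at a vertex P with neighbours Q, S the normal bisects
      the angle, then G(Q,P)/|QP| = G(S,P)/|SP|; hence on a 3-periodic
      G = J |side| for one constant J > 0 (three_periodic_ratio).
   2. Inversion about f1: |P'Q'| = rho^2 |PQ| / (d_P d_Q), d the focal radius,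
      and the power of P' w.r.t. the target circle is
      rho^4 c^2 / b^4 * y_P^2 / d_P^2 (focus_inv_dist, focus_inv_power).
   3. X100 lies on the circumcircle, so its power is the X100-weighted mean of
      the powers of the vertices (X100_power; Schur's inequality shows the
      weights have nonzero sum).  By 1 and 2 the numerator of that mean is a
      multiple of power_numerator (power_form_weights).
   4. power_numerator vanishes on every triangle inscribed in the ellipse whose
      sides all satisfy G^2 = K |side|^2: in a rational parametrization of the
      ellipse the side conditions become quadratics in the parameters, Vieta's
      relations and the caustic relation 4 K a^2 = 3 + 2 K c^2 - K^2 c^4 follow,
      and an explicit polynomial certificate (a symmetric-function expansion
      and its quotient by the caustic relation) finishes (power_numerator_eq0). *)

Section Euclid.
Variable R : rcfType.
Implicit Types (P Q u w n : pt R) (x y : R).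

Lemma sum_sqr_gt0 x y : (x, y) != (0, 0) -> 0 < x ^+ 2 + y ^+ 2.
Proof.
rewrite xpair_eqE negb_and => nz.
rewrite lt_def addr_ge0 ?sqr_ge0 // andbT paddr_eq0 ?sqr_ge0 // !sqrf_eq0.
by rewrite negb_and.
Qed.

Definition sqd P Q : R := (P.1 - Q.1) ^+ 2 + (P.2 - Q.2) ^+ 2.

Lemma sqd_sym P Q : sqd P Q = sqd Q P.
Proof. by rewrite /sqd -(sqrrN (P.1 - Q.1)) -(sqrrN (P.2 - Q.2)) !opprB. Qed.

Lemma dot_diff P Q : dot (psub P Q) (psub P Q) = sqd P Q.
Proof. by rewrite /dot /sqd /= -!expr2. Qed.

Lemma dist_sq P Q : dist P Q ^+ 2 = sqd P Q.
Proof. by rewrite /dist dot_diff sqr_sqrtr // addr_ge0 ?sqr_ge0. Qed.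

Lemma dist_sym P Q : dist P Q = dist Q P.
Proof. by rewrite /dist !dot_diff sqd_sym. Qed.

Lemma dist_gt0 P Q : P != Q -> 0 < dist P Q.
Proof.
case: P Q => [p1 p2] [q1 q2] neq; rewrite /dist dot_diff sqrtr_gt0 sum_sqr_gt0 //.
by apply: contraNneq neq => -[/eqP]; rewrite subr_eq0 => /eqP -> /eqP; rewrite subr_eq0 => /eqP ->.
Qed.

Lemma dot_pscale k P Q : dot (pscale k P) Q = k * dot P Q.
Proof. by rewrite /dot /=; ring. Qed.

Lemma dot_pscale2 k P : dot (pscale k P) (pscale k P) = k ^+ 2 * dot P P.
Proof. by rewrite /dot /=; ring. Qed.

Lemma unit_bisector u w n :
  dot u u = 1 -> dot w w = 1 -> cross (padd u w) n = 0 -> dot (padd u w) n != 0 ->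
  dot u n = dot w n.
Proof.
move=> uu ww par nz.
have s_nz : dot (padd u w) (padd u w) != 0.
  apply: contra nz; rewrite /dot -!expr2 paddr_eq0 ?sqr_ge0 // !sqrf_eq0.
  by case/andP => /eqP -> /eqP ->; rewrite !mul0r addr0.
have id : (dot u n - dot w n) * dot (padd u w) (padd u w) =
  (dot u u - dot w w) * dot (padd u w) n + cross (padd u w) (psub u w) * cross (padd u w) n.
  by rewrite /dot /cross /=; ring.
move/eqP: id; rewrite uu ww par subrr !mul0r mulr0 addr0 mulf_eq0 (negbTE s_nz) orbF.
by rewrite subr_eq0 => /eqP.
Qed.

End Euclid.

Section Ellipse.
Variable R : rcfType.
Implicit Types (P Q S : pt R) (a b : R).

(* Half the squared length of P - Q in the quadratic form x^2/a^2 + y^2/b^2 of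
   the ellipse; it plays the role of the Euclidean length in the reflection law. *)
Definition ell_sq a b P Q : R := ((P.1 - Q.1) ^+ 2 / a ^+ 2 + (P.2 - Q.2) ^+ 2 / b ^+ 2) / 2.

Lemma ell_sq_sym a b P Q : ell_sq a b P Q = ell_sq a b Q P.
Proof. by rewrite /ell_sq -(sqrrN (P.1 - Q.1)) -(sqrrN (P.2 - Q.2)) !opprB. Qed.

Lemma ell_sq_gt0 a b P Q : a != 0 -> b != 0 -> P != Q -> 0 < ell_sq a b P Q.
Proof.
case: P Q => [p1 p2] [q1 q2] a0 b0 neq; rewrite /ell_sq /= divr_gt0 //.
rewrite -!expr_div_n sum_sqr_gt0 //; apply: contraNneq neq => -[].
by move/eqP; rewrite mulf_eq0 invr_eq0 (negbTE a0) orbF subr_eq0 => /eqP ->;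
   move/eqP; rewrite mulf_eq0 invr_eq0 (negbTE b0) orbF subr_eq0 => /eqP ->.
Qed.

Definition ell_normal a b P : pt R := (P.1 / a ^+ 2, P.2 / b ^+ 2).

(* A chord QP of the ellipse meets the normal at P with
   <Q - P, n_P> = - ell_sq Q P: expand |Q|^2 = |P|^2 = 1 in the ellipse's form. *)
Lemma chord_normal a b P Q : a != 0 -> b != 0 -> on_ellipse a b P -> on_ellipse a b Q ->
  dot (psub Q P) (ell_normal a b P) = - ell_sq a b Q P.
Proof.
rewrite /on_ellipse => a0 b0 eP eQ; apply/eqP; rewrite -subr_eq0 opprK.
have -> : dot (psub Q P) (ell_normal a b P) + ell_sq a b Q P =
  ((Q.1 ^+ 2 / a ^+ 2 + Q.2 ^+ 2 / b ^+ 2) - (P.1 ^+ 2 / a ^+ 2 + P.2 ^+ 2 / b ^+ 2)) / 2.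
  by rewrite /dot /ell_sq /ell_normal /=; field; rewrite a0 b0.
by rewrite eP eQ subrr mul0r.
Qed.

Lemma reflection_ratio a b Q P S :
  a != 0 -> b != 0 -> on_ellipse a b Q -> on_ellipse a b P -> on_ellipse a b S ->
  Q != P -> S != P -> normal_bisects a b Q P S ->
  ell_sq a b Q P / dist Q P = ell_sq a b S P / dist S P.
Proof.
move=> a0 b0 eQ eP eS nQ nS bis.
have unit X : X != P -> dot (pscale (dist X P)^-1 (psub X P)) (pscale (dist X P)^-1 (psub X P)) = 1.
  move=> nX; rewrite dot_pscale2 dot_diff -dist_sq exprVn mulVf //.
  by rewrite expf_neq0 // gt_eqF // dist_gt0.
have along X : on_ellipse a b X ->
  dot (pscale (dist X P)^-1 (psub X P)) (ell_normal a b P) = - (ell_sq a b X P / dist X P).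
  by move=> eX; rewrite dot_pscale chord_normal // mulrN mulrC.
have nz : dot (padd (pscale (dist Q P)^-1 (psub Q P)) (pscale (dist S P)^-1 (psub S P)))
            (ell_normal a b P) != 0.
  have -> : forall u w n : pt R, dot (padd u w) n = dot u n + dot w n.
    by move=> u w n; rewrite /dot /=; ring.
  rewrite !along // -opprD oppr_eq0 gt_eqF // addr_gt0 // divr_gt0 ?ell_sq_gt0 ?dist_gt0 //.
have := unit_bisector (unit Q nQ) (unit S nS) bis nz.
by rewrite !along // => /eqP; rewrite eqr_opp => /eqP.
Qed.

Lemma three_periodic_ratio a b P1 P2 P3 :
  0 < a -> 0 < b -> three_periodic a b P1 P2 P3 ->
  exists2 J, 0 < J &
    [/\ ell_sq a b P2 P3 = J * dist P2 P3, ell_sq a b P3 P1 = J * dist P3 P1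
      & ell_sq a b P1 P2 = J * dist P1 P2].
Proof.
move=> a0 b0 [e1 e2 e3 [/eqP n12 /eqP n23 /eqP n31] [v1 v2 _]].
have [a0' b0'] : a != 0 /\ b != 0 by split; apply: lt0r_neq0.
have n21 : P2 != P1 by rewrite eq_sym.
have n32 : P3 != P2 by rewrite eq_sym.
have at1 := reflection_ratio a0' b0' e3 e1 e2 n31 n21 v1.
have at2 := reflection_ratio a0' b0' e1 e2 e3 n12 n32 v2.
rewrite [in RHS]ell_sq_sym [in RHS]dist_sym in at1.
rewrite [in RHS]ell_sq_sym [in RHS]dist_sym in at2.
exists (ell_sq a b P1 P2 / dist P1 P2); first by rewrite divr_gt0 ?ell_sq_gt0 ?dist_gt0.
have scaled X Y : X != Y -> ell_sq a b X Y / dist X Y * dist X Y = ell_sq a b X Y.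
  by move=> nXY; rewrite divfK // gt_eqF // dist_gt0.
by split; [rewrite at2 | rewrite -at1 |]; rewrite scaled.
Qed.

End Ellipse.

Section Parametrization.
Variable R : rcfType.
Implicit Types (P Q : pt R) (a b c K U V t : R).

(* The rational parametrization of the ellipse by homogeneous parameters (U : V);
   (U : V) = (1 : 0) gives the left vertex (-a, 0). *)
Definition ellipse_pt a b U V : pt R :=
  (a * (V ^+ 2 - U ^+ 2) / (U ^+ 2 + V ^+ 2), 2 * b * U * V / (U ^+ 2 + V ^+ 2)).

Lemma sqr1_neq0 t : t ^+ 2 + 1 ^+ 2 != 0.
Proof. by rewrite gt_eqF // sum_sqr_gt0 // xpair_eqE oner_eq0 andbF. Qed.

Lemma ellipse_left_vertex a b P :
  0 < a -> 0 < b -> on_ellipse a b P -> P.1 = - a -> P = (- a, 0).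
Proof.
case: P => x y a0 b0; rewrite /on_ellipse /= => e hx; rewrite hx in e *; congr pair.
have : y ^+ 2 / b ^+ 2 = 0.
  have -> : y ^+ 2 / b ^+ 2 = 1 - (- a) ^+ 2 / a ^+ 2 by rewrite -e; ring.
  by rewrite sqrrN divff ?subrr // expf_neq0 // gt_eqF.
by move/eqP; rewrite mulf_eq0 invr_eq0 !expf_eq0 (gt_eqF b0) /= orbF => /eqP.
Qed.

Lemma ellipse_param a b P :
  0 < a -> 0 < b -> on_ellipse a b P -> P.1 != - a ->
  P = ellipse_pt a b (a * P.2 / (b * (a + P.1))) 1.
Proof.
case: P => x y /= a0 b0; rewrite /on_ellipse /= => e xa.
have [a0' b0'] : a != 0 /\ b != 0 by split; apply: lt0r_neq0.
have ax : a + x != 0 by rewrite addrC addr_eq0.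
have s2 : a - x + (a + x) != 0 by apply: lt0r_neq0; lra.
have hy : a ^+ 2 * y ^+ 2 = b ^+ 2 * (a ^+ 2 - x ^+ 2).
  apply/eqP; rewrite -subr_eq0.
  have -> : a ^+ 2 * y ^+ 2 - b ^+ 2 * (a ^+ 2 - x ^+ 2) =
    a ^+ 2 * b ^+ 2 * (x ^+ 2 / a ^+ 2 + y ^+ 2 / b ^+ 2 - 1) by field; rewrite a0' b0'.
  by rewrite e subrr mulr0.
set t := a * y / (b * (a + x)).
have ht : t ^+ 2 = (a - x) / (a + x).
  apply/eqP; rewrite -subr_eq0.
  have -> : t ^+ 2 - (a - x) / (a + x) =
    (a ^+ 2 * y ^+ 2 - b ^+ 2 * (a ^+ 2 - x ^+ 2)) / (b ^+ 2 * (a + x) ^+ 2).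
    by rewrite /t; field; rewrite ax b0'.
  by rewrite hy subrr mul0r.
rewrite /ellipse_pt expr1n ht; congr pair; first by field; rewrite ax s2.
by rewrite /t; field; rewrite ax s2 b0'.
Qed.

Lemma ellipse_param_any a b P :
  0 < a -> 0 < b -> on_ellipse a b P -> exists U V, U ^+ 2 + V ^+ 2 != 0 /\ P = ellipse_pt a b U V.
Proof.
move=> a0 b0 e; have [xa|xa] := eqVneq P.1 (- a).
  exists 1, 0; rewrite expr1n expr0n addr0 oner_eq0; split => //.
  by rewrite (ellipse_left_vertex a0 b0 e xa) /ellipse_pt; congr pair; field.
by exists (a * P.2 / (b * (a + P.1))), 1; split; [exact: sqr1_neq0 | exact: ellipse_param].
Qed.

(* For distinct points of parameters (U1 : V1), (U2 : V2), the chord condition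
   ell_sq^2 = K |chord|^2 holds iff this biquadratic form vanishes
   (with b^2 = a^2 - c^2); chord_poly_spec is the underlying identity. *)
Definition chord_poly a c K U1 V1 U2 V2 : R :=
  (U1 * V2 - U2 * V1) ^+ 2
  - K * (a ^+ 2 * (U1 * V2 + U2 * V1) ^+ 2 + (a ^+ 2 - c ^+ 2) * (V1 * V2 - U1 * U2) ^+ 2).

Lemma chord_poly_spec a b c K U1 V1 U2 V2 :
  a != 0 -> b != 0 -> c ^+ 2 = a ^+ 2 - b ^+ 2 ->
  U1 ^+ 2 + V1 ^+ 2 != 0 -> U2 ^+ 2 + V2 ^+ 2 != 0 ->
  let P := ellipse_pt a b U1 V1 in let Q := ellipse_pt a b U2 V2 in
  ell_sq a b P Q ^+ 2 - K * sqd P Q =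
  2 * ell_sq a b P Q * chord_poly a c K U1 V1 U2 V2 / ((U1 ^+ 2 + V1 ^+ 2) * (U2 ^+ 2 + V2 ^+ 2)).
Proof.
move=> a0 b0 hc n1 n2 /=; rewrite /chord_poly (_ : a ^+ 2 - c ^+ 2 = b ^+ 2); last first.
  by rewrite hc; ring.
by rewrite /ell_sq /sqd /ellipse_pt /=; field; rewrite n1 n2 a0 b0.
Qed.

Lemma chord_poly_eq0 a b c K U1 V1 U2 V2 :
  a != 0 -> b != 0 -> c ^+ 2 = a ^+ 2 - b ^+ 2 ->
  U1 ^+ 2 + V1 ^+ 2 != 0 -> U2 ^+ 2 + V2 ^+ 2 != 0 ->
  let P := ellipse_pt a b U1 V1 in let Q := ellipse_pt a b U2 V2 in
  ell_sq a b P Q != 0 -> ell_sq a b P Q ^+ 2 = K * sqd P Q ->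
  chord_poly a c K U1 V1 U2 V2 = 0.
Proof.
move=> a0 b0 hc n1 n2 P Q g0 e.
have : 2 * ell_sq a b P Q * chord_poly a c K U1 V1 U2 V2
         / ((U1 ^+ 2 + V1 ^+ 2) * (U2 ^+ 2 + V2 ^+ 2)) == 0.
  by rewrite -(chord_poly_spec K a0 b0 hc n1 n2) -/P -/Q e subrr.
move: g0; move: (ell_sq a b P Q) => g g0.
rewrite !mulf_eq0 invr_eq0 !mulf_eq0 (negbTE n1) (negbTE n2) (negbTE g0) pnatr_eq0 /=.
by rewrite orbF => /eqP.
Qed.

End Parametrization.

Lemma vieta (F : idomainType) (al be ga t2 t3 : F) : t2 != t3 ->
  al * t2 ^+ 2 + be * t2 + ga = 0 -> al * t3 ^+ 2 + be * t3 + ga = 0 ->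
  al * (t2 + t3) = - be /\ al * (t2 * t3) = ga.
Proof.
rewrite -subr_eq0 => t23 r2 r3; split; apply/eqP.
  have : (t2 - t3) * (al * (t2 + t3) + be) == 0.
    have -> : (t2 - t3) * (al * (t2 + t3) + be) =
      al * t2 ^+ 2 + be * t2 + ga - (al * t3 ^+ 2 + be * t3 + ga) by ring.
    by rewrite r2 r3 subrr.
  by rewrite mulf_eq0 (negbTE t23) /= addr_eq0.
have : (t2 - t3) * (al * (t2 * t3) - ga) == 0.
  have -> : (t2 - t3) * (al * (t2 * t3) - ga) =
    t3 * (al * t2 ^+ 2 + be * t2 + ga) - t2 * (al * t3 ^+ 2 + be * t3 + ga) by ring.
  by rewrite r2 r3 !mulr0 subrr.
by rewrite mulf_eq0 (negbTE t23) /= subr_eq0.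
Qed.

Section Core.
Variable R : rcfType.
Implicit Types (a c K U V A : R).

(* chord_poly a c K U V t 1 is a quadratic in t; these are its coefficients,
   written with A standing for a^2. *)
Definition chord_lead A c K U V : R := V ^+ 2 - K * (A * V ^+ 2 + (A - c ^+ 2) * U ^+ 2).
Definition chord_mid c K U V : R := - (2 * U * V * (1 + K * c ^+ 2)).
Definition chord_const A c K U V : R := U ^+ 2 - K * (A * U ^+ 2 + (A - c ^+ 2) * V ^+ 2).

Lemma chord_poly_quadratic a c K U V t :
  chord_poly a c K U V t 1 =
  chord_lead (a ^+ 2) c K U V * t ^+ 2 + chord_mid c K U V * t + chord_const (a ^+ 2) c K U V.
Proof. by rewrite /chord_poly /chord_lead /chord_mid /chord_const; ring. Qed.

(* The caustic relation 4 K a^2 = 3 + 2 K c^2 - K^2 c^4 (with A standing for a^2):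
   it holds as soon as some triangle with three chords satisfying the chord
   condition is inscribed in the ellipse, see caustic_relation. *)
Definition caustic_poly A c K : R := 3 + 2 * K * c ^+ 2 - K ^+ 2 * c ^+ 4 - 4 * K * A.

Lemma sqr_comb_gt0 p q U V : 0 < p -> 0 < q -> U ^+ 2 + V ^+ 2 != 0 -> 0 < p * V ^+ 2 + q * U ^+ 2.
Proof.
move=> p0 q0 nz; have pV := mulr_ge0 (ltW p0) (sqr_ge0 V).
have qU := mulr_ge0 (ltW q0) (sqr_ge0 U).
have [V0|V0] := eqVneq V 0.
  have : 0 < q * U ^+ 2 by rewrite mulr_gt0 // lt_def sqr_ge0 sqrf_eq0; move: nz; rewrite V0 expr0n addr0 sqrf_eq0 => ->.
  lra.
have : 0 < p * V ^+ 2 by rewrite mulr_gt0 // lt_def sqr_ge0 sqrf_eq0 V0.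
lra.
Qed.

(* If t2, t3 are the two roots of the quadratic chord_poly a c K U V t 1 and the
   chord between (t2 : 1) and (t3 : 1) also satisfies the chord condition, then
   the caustic relation holds: the discriminant of the quadratic factors
   through it. *)
Lemma caustic_relation a c K U V t2 t3 :
  0 < c -> c < a -> 0 < K -> U ^+ 2 + V ^+ 2 != 0 ->
  chord_lead (a ^+ 2) c K U V * (t2 + t3) = - chord_mid c K U V ->
  chord_lead (a ^+ 2) c K U V * (t2 * t3) = chord_const (a ^+ 2) c K U V ->
  chord_poly a c K t2 1 t3 1 = 0 -> caustic_poly (a ^+ 2) c K = 0.
Proof.
move=> c0 ca K0 nz sum prod chord23.
set l := chord_lead _ _ _ _ _ in sum prod; set m := chord_mid _ _ _ _ in sum.
set k := chord_const _ _ _ _ _ in prod.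
have EA : 0 < (a + c) * V ^+ 2 + (a - c) * U ^+ 2 by apply: sqr_comb_gt0 => //; lra.
have EB : 0 < (a - c) * V ^+ 2 + (a + c) * U ^+ 2 by apply: sqr_comb_gt0 => //; lra.
have disc : K * caustic_poly (a ^+ 2) c K * (((a + c) * V ^+ 2 + (a - c) * U ^+ 2) * ((a - c) * V ^+ 2 + (a + c) * U ^+ 2))
    = l ^+ 2 * chord_poly a c K t2 1 t3 1.
  transitivity (m ^+ 2 - 4 * l * k - K * (a ^+ 2 * m ^+ 2 + (a ^+ 2 - c ^+ 2) * (l - k) ^+ 2)).
    by rewrite /l /m /k /caustic_poly /chord_lead /chord_mid /chord_const; ring.
  by rewrite -(opprK m) -sum -prod /chord_poly; ring.
move/eqP: disc; rewrite chord23 mulr0 !mulf_eq0 (gt_eqF K0) (gt_eqF EA) (gt_eqF EB) /= !orbF.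
by move/eqP.
Qed.

Lemma chord_mid_neq0 a c K U V :
  0 < c -> c < a -> 0 < K -> U ^+ 2 + V ^+ 2 != 0 -> caustic_poly (a ^+ 2) c K = 0 ->
  chord_lead (a ^+ 2) c K U V = 0 -> chord_mid c K U V != 0.
Proof.
move=> c0 ca K0 nz caus lead0; apply/negP => /eqP mid0.
have ca2 : c ^+ 2 < a ^+ 2 by nra.
have KKc : 0 < 2 * (1 + K * c ^+ 2) by rewrite mulr_gt0 // addr_gt0 // mulr_gt0 // exprn_gt0.
have : U * V * (2 * (1 + K * c ^+ 2)) = 0 by rewrite -[RHS]oppr0 -mid0 /chord_mid; ring.
move/eqP; rewrite mulf_eq0 (gt_eqF KKc) orbF mulf_eq0 => /orP[] /eqP z.
- have V2 : V ^+ 2 != 0 by move: nz; rewrite z expr0n add0r.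
  have Ka : K * a ^+ 2 = 1.
    move/eqP: lead0; rewrite /chord_lead z expr0n /= mulr0 addr0.
    rewrite (_ : _ - _ = V ^+ 2 * (1 - K * a ^+ 2)); last by ring.
    by rewrite mulf_eq0 (negbTE V2) /= subr_eq0 => /eqP.
  have Kc : (K * c ^+ 2 - 1) ^+ 2 = 0.
    have -> : (K * c ^+ 2 - 1) ^+ 2 = - caustic_poly (a ^+ 2) c K + 4 * (1 - K * a ^+ 2).
      by rewrite /caustic_poly; ring.
    by rewrite caus Ka subrr mulr0 oppr0 addr0.
  move/eqP: Kc; rewrite sqrf_eq0 subr_eq0 -Ka => /eqP /(mulfI (lt0r_neq0 K0)) c2a2.
  by move: ca2; rewrite c2a2 ltxx.
- have U0 : 0 < U ^+ 2 by rewrite lt_def sqr_ge0 andbT; move: nz; rewrite z expr0n addr0.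
  have : chord_lead (a ^+ 2) c K U V < 0.
    rewrite /chord_lead z expr0n /= mulr0 sub0r add0r oppr_lt0 mulr_gt0 // mulr_gt0 //.
    by rewrite subr_gt0.
  by rewrite lead0 ltxx.
Qed.

(* The polynomial whose vanishing is the heart of the theorem: in the
   parametrization P1 = (U : V), P2 = (t2 : 1), P3 = (t3 : 1), each E_i is
   proportional to the focal radius |P_i f1|, each of (t2 - t3)^2, (t3 V - U)^2,
   (U - t2 V)^2 to ell_sq of a side, and U V, t2, t3 to the ordinates; see
   power_numerator_param below. *)
Definition power_poly a c U V t2 t3 : R :=
  let E1 := (a + c) * V ^+ 2 + (a - c) * U ^+ 2 in
  let E2 := (a + c) + (a - c) * t2 ^+ 2 in
  let E3 := (a + c) + (a - c) * t3 ^+ 2 in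
  let M1 := (t2 - t3) ^+ 2 * E1 in
  let M2 := (t3 * V - U) ^+ 2 * E2 in
  let M3 := (U - t2 * V) ^+ 2 * E3 in
  (t2 - t3) ^+ 2 * U ^+ 2 * V ^+ 2 * E2 * E3 * (M3 - M1) * (M1 - M2)
  + (t3 * V - U) ^+ 2 * t2 ^+ 2 * E1 * E3 * (M1 - M2) * (M2 - M3)
  + (U - t2 * V) ^+ 2 * t3 ^+ 2 * E1 * E2 * (M2 - M3) * (M3 - M1).

(* power_poly is symmetric in t2, t3; this is its expression through
   S = t2 + t3 and P = t2 t3, homogenised by Q, with A standing for a^2. *)
Definition sym_cert a A c U V S P Q : R :=
    4*a*A*c*U^+8*S^+4*P^+2*Q^+2 + 4*a*A*c*U^+8*S^+4*P*Q^+3 - 16*a*A*c*U^+8*S^+2*P^+3*Q^+3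
    - 16*a*A*c*U^+8*S^+2*P^+2*Q^+4 - 8*a*A*c*U^+7*V*S^+5*P^+2*Q - 4*a*A*c*U^+7*V*S^+5*P*Q^+2
    + 40*a*A*c*U^+7*V*S^+3*P^+3*Q^+2 + 12*a*A*c*U^+7*V*S^+3*P^+2*Q^+3
    - 4*a*A*c*U^+7*V*S^+3*Q^+5 - 32*a*A*c*U^+7*V*S*P^+4*Q^+3 + 16*a*A*c*U^+7*V*S*P^+3*Q^+4
    + 16*a*A*c*U^+7*V*S*P*Q^+6 + 4*a*A*c*U^+6*V^+2*S^+6*P^+2 - 4*a*A*c*U^+6*V^+2*S^+6*P*Q
    - 24*a*A*c*U^+6*V^+2*S^+4*P^+3*Q + 40*a*A*c*U^+6*V^+2*S^+4*P^+2*Q^+2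
    + 36*a*A*c*U^+6*V^+2*S^+2*P^+4*Q^+2 - 104*a*A*c*U^+6*V^+2*S^+2*P^+3*Q^+3
    + 8*a*A*c*U^+6*V^+2*S^+2*P*Q^+5 - 4*a*A*c*U^+6*V^+2*S^+2*Q^+6
    - 16*a*A*c*U^+6*V^+2*P^+5*Q^+3 + 32*a*A*c*U^+6*V^+2*P^+4*Q^+4
    - 32*a*A*c*U^+6*V^+2*P^+2*Q^+6 + 16*a*A*c*U^+6*V^+2*P*Q^+7 + 4*a*A*c*U^+5*V^+3*S^+7*P
    - 36*a*A*c*U^+5*V^+3*S^+5*P^+2*Q + 8*a*A*c*U^+5*V^+3*S^+5*Q^+3
    + 8*a*A*c*U^+5*V^+3*S^+3*P^+4*Q + 92*a*A*c*U^+5*V^+3*S^+3*P^+3*Q^+2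
    - 52*a*A*c*U^+5*V^+3*S^+3*P*Q^+4 - 32*a*A*c*U^+5*V^+3*S*P^+5*Q^+2
    - 48*a*A*c*U^+5*V^+3*S*P^+4*Q^+3 + 80*a*A*c*U^+5*V^+3*S*P^+2*Q^+5
    - 8*a*A*c*U^+4*V^+4*S^+4*P^+4 + 12*a*A*c*U^+4*V^+4*S^+4*P^+3*Q
    - 12*a*A*c*U^+4*V^+4*S^+4*P*Q^+3 + 8*a*A*c*U^+4*V^+4*S^+4*Q^+4
    + 40*a*A*c*U^+4*V^+4*S^+2*P^+5*Q - 64*a*A*c*U^+4*V^+4*S^+2*P^+4*Q^+2
    + 64*a*A*c*U^+4*V^+4*S^+2*P^+2*Q^+4 - 40*a*A*c*U^+4*V^+4*S^+2*P*Q^+5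
    - 32*a*A*c*U^+4*V^+4*P^+6*Q^+2 + 64*a*A*c*U^+4*V^+4*P^+5*Q^+3
    - 64*a*A*c*U^+4*V^+4*P^+3*Q^+5 + 32*a*A*c*U^+4*V^+4*P^+2*Q^+6 - 4*a*A*c*U^+3*V^+5*S^+7*Q
    - 8*a*A*c*U^+3*V^+5*S^+5*P^+3 + 36*a*A*c*U^+3*V^+5*S^+5*P*Q^+2
    + 52*a*A*c*U^+3*V^+5*S^+3*P^+4*Q - 92*a*A*c*U^+3*V^+5*S^+3*P^+2*Q^+3
    - 8*a*A*c*U^+3*V^+5*S^+3*P*Q^+4 - 80*a*A*c*U^+3*V^+5*S*P^+5*Q^+2
    + 48*a*A*c*U^+3*V^+5*S*P^+3*Q^+4 + 32*a*A*c*U^+3*V^+5*S*P^+2*Q^+5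
    + 4*a*A*c*U^+2*V^+6*S^+6*P*Q - 4*a*A*c*U^+2*V^+6*S^+6*Q^+2
    - 40*a*A*c*U^+2*V^+6*S^+4*P^+2*Q^+2 + 24*a*A*c*U^+2*V^+6*S^+4*P*Q^+3
    + 4*a*A*c*U^+2*V^+6*S^+2*P^+6 - 8*a*A*c*U^+2*V^+6*S^+2*P^+5*Q
    + 104*a*A*c*U^+2*V^+6*S^+2*P^+3*Q^+3 - 36*a*A*c*U^+2*V^+6*S^+2*P^+2*Q^+4
    - 16*a*A*c*U^+2*V^+6*P^+7*Q + 32*a*A*c*U^+2*V^+6*P^+6*Q^+2
    - 32*a*A*c*U^+2*V^+6*P^+4*Q^+4 + 16*a*A*c*U^+2*V^+6*P^+3*Q^+5
    + 4*a*A*c*U*V^+7*S^+5*P^+2*Q + 8*a*A*c*U*V^+7*S^+5*P*Q^+2 + 4*a*A*c*U*V^+7*S^+3*P^+5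
    - 12*a*A*c*U*V^+7*S^+3*P^+3*Q^+2 - 40*a*A*c*U*V^+7*S^+3*P^+2*Q^+3
    - 16*a*A*c*U*V^+7*S*P^+6*Q - 16*a*A*c*U*V^+7*S*P^+4*Q^+3 + 32*a*A*c*U*V^+7*S*P^+3*Q^+4
    - 4*a*A*c*V^+8*S^+4*P^+3*Q - 4*a*A*c*V^+8*S^+4*P^+2*Q^+2 + 16*a*A*c*V^+8*S^+2*P^+4*Q^+2
    + 16*a*A*c*V^+8*S^+2*P^+3*Q^+3 + 4*a*c^+3*U^+8*S^+4*P^+2*Q^+2
    - 4*a*c^+3*U^+8*S^+4*P*Q^+3 - 16*a*c^+3*U^+8*S^+2*P^+3*Q^+3
    + 16*a*c^+3*U^+8*S^+2*P^+2*Q^+4 - 8*a*c^+3*U^+7*V*S^+5*P^+2*Q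
    + 4*a*c^+3*U^+7*V*S^+5*P*Q^+2 + 40*a*c^+3*U^+7*V*S^+3*P^+3*Q^+2
    - 12*a*c^+3*U^+7*V*S^+3*P^+2*Q^+3 + 4*a*c^+3*U^+7*V*S^+3*Q^+5
    - 32*a*c^+3*U^+7*V*S*P^+4*Q^+3 - 16*a*c^+3*U^+7*V*S*P^+3*Q^+4
    - 16*a*c^+3*U^+7*V*S*P*Q^+6 + 4*a*c^+3*U^+6*V^+2*S^+6*P^+2 + 4*a*c^+3*U^+6*V^+2*S^+6*P*Q
    - 24*a*c^+3*U^+6*V^+2*S^+4*P^+3*Q - 40*a*c^+3*U^+6*V^+2*S^+4*P^+2*Q^+2
    + 36*a*c^+3*U^+6*V^+2*S^+2*P^+4*Q^+2 + 104*a*c^+3*U^+6*V^+2*S^+2*P^+3*Q^+3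
    - 8*a*c^+3*U^+6*V^+2*S^+2*P*Q^+5 - 4*a*c^+3*U^+6*V^+2*S^+2*Q^+6
    - 16*a*c^+3*U^+6*V^+2*P^+5*Q^+3 - 32*a*c^+3*U^+6*V^+2*P^+4*Q^+4
    + 32*a*c^+3*U^+6*V^+2*P^+2*Q^+6 + 16*a*c^+3*U^+6*V^+2*P*Q^+7 - 4*a*c^+3*U^+5*V^+3*S^+7*P
    + 36*a*c^+3*U^+5*V^+3*S^+5*P^+2*Q - 8*a*c^+3*U^+5*V^+3*S^+5*Q^+3
    + 8*a*c^+3*U^+5*V^+3*S^+3*P^+4*Q - 92*a*c^+3*U^+5*V^+3*S^+3*P^+3*Q^+2
    + 52*a*c^+3*U^+5*V^+3*S^+3*P*Q^+4 - 32*a*c^+3*U^+5*V^+3*S*P^+5*Q^+2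
    + 48*a*c^+3*U^+5*V^+3*S*P^+4*Q^+3 - 80*a*c^+3*U^+5*V^+3*S*P^+2*Q^+5
    - 8*a*c^+3*U^+4*V^+4*S^+4*P^+4 - 12*a*c^+3*U^+4*V^+4*S^+4*P^+3*Q
    + 12*a*c^+3*U^+4*V^+4*S^+4*P*Q^+3 + 8*a*c^+3*U^+4*V^+4*S^+4*Q^+4
    + 40*a*c^+3*U^+4*V^+4*S^+2*P^+5*Q + 64*a*c^+3*U^+4*V^+4*S^+2*P^+4*Q^+2
    - 64*a*c^+3*U^+4*V^+4*S^+2*P^+2*Q^+4 - 40*a*c^+3*U^+4*V^+4*S^+2*P*Q^+5
    - 32*a*c^+3*U^+4*V^+4*P^+6*Q^+2 - 64*a*c^+3*U^+4*V^+4*P^+5*Q^+3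
    + 64*a*c^+3*U^+4*V^+4*P^+3*Q^+5 + 32*a*c^+3*U^+4*V^+4*P^+2*Q^+6
    + 4*a*c^+3*U^+3*V^+5*S^+7*Q + 8*a*c^+3*U^+3*V^+5*S^+5*P^+3
    - 36*a*c^+3*U^+3*V^+5*S^+5*P*Q^+2 - 52*a*c^+3*U^+3*V^+5*S^+3*P^+4*Q
    + 92*a*c^+3*U^+3*V^+5*S^+3*P^+2*Q^+3 - 8*a*c^+3*U^+3*V^+5*S^+3*P*Q^+4
    + 80*a*c^+3*U^+3*V^+5*S*P^+5*Q^+2 - 48*a*c^+3*U^+3*V^+5*S*P^+3*Q^+4
    + 32*a*c^+3*U^+3*V^+5*S*P^+2*Q^+5 - 4*a*c^+3*U^+2*V^+6*S^+6*P*Q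
    - 4*a*c^+3*U^+2*V^+6*S^+6*Q^+2 + 40*a*c^+3*U^+2*V^+6*S^+4*P^+2*Q^+2
    + 24*a*c^+3*U^+2*V^+6*S^+4*P*Q^+3 + 4*a*c^+3*U^+2*V^+6*S^+2*P^+6
    + 8*a*c^+3*U^+2*V^+6*S^+2*P^+5*Q - 104*a*c^+3*U^+2*V^+6*S^+2*P^+3*Q^+3
    - 36*a*c^+3*U^+2*V^+6*S^+2*P^+2*Q^+4 - 16*a*c^+3*U^+2*V^+6*P^+7*Q
    - 32*a*c^+3*U^+2*V^+6*P^+6*Q^+2 + 32*a*c^+3*U^+2*V^+6*P^+4*Q^+4
    + 16*a*c^+3*U^+2*V^+6*P^+3*Q^+5 - 4*a*c^+3*U*V^+7*S^+5*P^+2*Q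
    + 8*a*c^+3*U*V^+7*S^+5*P*Q^+2 - 4*a*c^+3*U*V^+7*S^+3*P^+5
    + 12*a*c^+3*U*V^+7*S^+3*P^+3*Q^+2 - 40*a*c^+3*U*V^+7*S^+3*P^+2*Q^+3
    + 16*a*c^+3*U*V^+7*S*P^+6*Q + 16*a*c^+3*U*V^+7*S*P^+4*Q^+3
    + 32*a*c^+3*U*V^+7*S*P^+3*Q^+4 + 4*a*c^+3*V^+8*S^+4*P^+3*Q
    - 4*a*c^+3*V^+8*S^+4*P^+2*Q^+2 - 16*a*c^+3*V^+8*S^+2*P^+4*Q^+2
    + 16*a*c^+3*V^+8*S^+2*P^+3*Q^+3 - A^+2*U^+8*S^+4*P^+2*Q^+2 - 2*A^+2*U^+8*S^+4*P*Q^+3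
    - A^+2*U^+8*S^+4*Q^+4 + 4*A^+2*U^+8*S^+2*P^+3*Q^+3 + 8*A^+2*U^+8*S^+2*P^+2*Q^+4
    + 4*A^+2*U^+8*S^+2*P*Q^+5 + 2*A^+2*U^+7*V*S^+5*P^+2*Q + 2*A^+2*U^+7*V*S^+5*P*Q^+2
    - 10*A^+2*U^+7*V*S^+3*P^+3*Q^+2 - 6*A^+2*U^+7*V*S^+3*P^+2*Q^+3
    + 2*A^+2*U^+7*V*S^+3*P*Q^+4 - 2*A^+2*U^+7*V*S^+3*Q^+5 + 8*A^+2*U^+7*V*S*P^+4*Q^+3
    - 8*A^+2*U^+7*V*S*P^+3*Q^+4 - 8*A^+2*U^+7*V*S*P^+2*Q^+5 + 8*A^+2*U^+7*V*S*P*Q^+6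
    - A^+2*U^+6*V^+2*S^+6*P^+2 + 2*A^+2*U^+6*V^+2*S^+6*P*Q + 2*A^+2*U^+6*V^+2*S^+6*Q^+2
    + 6*A^+2*U^+6*V^+2*S^+4*P^+3*Q - 20*A^+2*U^+6*V^+2*S^+4*P^+2*Q^+2
    - 14*A^+2*U^+6*V^+2*S^+4*P*Q^+3 - 9*A^+2*U^+6*V^+2*S^+2*P^+4*Q^+2
    + 52*A^+2*U^+6*V^+2*S^+2*P^+3*Q^+3 + 18*A^+2*U^+6*V^+2*S^+2*P^+2*Q^+4
    + 4*A^+2*U^+6*V^+2*S^+2*P*Q^+5 - A^+2*U^+6*V^+2*S^+2*Q^+6 + 4*A^+2*U^+6*V^+2*P^+5*Q^+3
    - 16*A^+2*U^+6*V^+2*P^+4*Q^+4 + 24*A^+2*U^+6*V^+2*P^+3*Q^+5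
    - 16*A^+2*U^+6*V^+2*P^+2*Q^+6 + 4*A^+2*U^+6*V^+2*P*Q^+7 - 2*A^+2*U^+5*V^+3*S^+7*P
    + 18*A^+2*U^+5*V^+3*S^+5*P^+2*Q - 2*A^+2*U^+5*V^+3*S^+5*P*Q^+2
    + 4*A^+2*U^+5*V^+3*S^+5*Q^+3 - 2*A^+2*U^+5*V^+3*S^+3*P^+4*Q
    - 46*A^+2*U^+5*V^+3*S^+3*P^+3*Q^+2 + 26*A^+2*U^+5*V^+3*S^+3*P^+2*Q^+3
    - 26*A^+2*U^+5*V^+3*S^+3*P*Q^+4 + 8*A^+2*U^+5*V^+3*S*P^+5*Q^+2
    + 24*A^+2*U^+5*V^+3*S*P^+4*Q^+3 - 72*A^+2*U^+5*V^+3*S*P^+3*Q^+4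
    + 40*A^+2*U^+5*V^+3*S*P^+2*Q^+5 - A^+2*U^+4*V^+4*S^+8 + 10*A^+2*U^+4*V^+4*S^+6*P*Q
    + 2*A^+2*U^+4*V^+4*S^+4*P^+4 - 6*A^+2*U^+4*V^+4*S^+4*P^+3*Q
    - 40*A^+2*U^+4*V^+4*S^+4*P^+2*Q^+2 - 6*A^+2*U^+4*V^+4*S^+4*P*Q^+3
    + 2*A^+2*U^+4*V^+4*S^+4*Q^+4 - 10*A^+2*U^+4*V^+4*S^+2*P^+5*Q
    + 32*A^+2*U^+4*V^+4*S^+2*P^+4*Q^+2 + 52*A^+2*U^+4*V^+4*S^+2*P^+3*Q^+3
    + 32*A^+2*U^+4*V^+4*S^+2*P^+2*Q^+4 - 10*A^+2*U^+4*V^+4*S^+2*P*Q^+5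
    + 8*A^+2*U^+4*V^+4*P^+6*Q^+2 - 32*A^+2*U^+4*V^+4*P^+5*Q^+3 + 48*A^+2*U^+4*V^+4*P^+4*Q^+4
    - 32*A^+2*U^+4*V^+4*P^+3*Q^+5 + 8*A^+2*U^+4*V^+4*P^+2*Q^+6 - 2*A^+2*U^+3*V^+5*S^+7*Q
    + 4*A^+2*U^+3*V^+5*S^+5*P^+3 - 2*A^+2*U^+3*V^+5*S^+5*P^+2*Q
    + 18*A^+2*U^+3*V^+5*S^+5*P*Q^+2 - 26*A^+2*U^+3*V^+5*S^+3*P^+4*Q
    + 26*A^+2*U^+3*V^+5*S^+3*P^+3*Q^+2 - 46*A^+2*U^+3*V^+5*S^+3*P^+2*Q^+3
    - 2*A^+2*U^+3*V^+5*S^+3*P*Q^+4 + 40*A^+2*U^+3*V^+5*S*P^+5*Q^+2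
    - 72*A^+2*U^+3*V^+5*S*P^+4*Q^+3 + 24*A^+2*U^+3*V^+5*S*P^+3*Q^+4
    + 8*A^+2*U^+3*V^+5*S*P^+2*Q^+5 + 2*A^+2*U^+2*V^+6*S^+6*P^+2 + 2*A^+2*U^+2*V^+6*S^+6*P*Q
    - A^+2*U^+2*V^+6*S^+6*Q^+2 - 14*A^+2*U^+2*V^+6*S^+4*P^+3*Q
    - 20*A^+2*U^+2*V^+6*S^+4*P^+2*Q^+2 + 6*A^+2*U^+2*V^+6*S^+4*P*Q^+3
    - A^+2*U^+2*V^+6*S^+2*P^+6 + 4*A^+2*U^+2*V^+6*S^+2*P^+5*Q
    + 18*A^+2*U^+2*V^+6*S^+2*P^+4*Q^+2 + 52*A^+2*U^+2*V^+6*S^+2*P^+3*Q^+3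
    - 9*A^+2*U^+2*V^+6*S^+2*P^+2*Q^+4 + 4*A^+2*U^+2*V^+6*P^+7*Q
    - 16*A^+2*U^+2*V^+6*P^+6*Q^+2 + 24*A^+2*U^+2*V^+6*P^+5*Q^+3
    - 16*A^+2*U^+2*V^+6*P^+4*Q^+4 + 4*A^+2*U^+2*V^+6*P^+3*Q^+5 + 2*A^+2*U*V^+7*S^+5*P^+2*Q
    + 2*A^+2*U*V^+7*S^+5*P*Q^+2 - 2*A^+2*U*V^+7*S^+3*P^+5 + 2*A^+2*U*V^+7*S^+3*P^+4*Q
    - 6*A^+2*U*V^+7*S^+3*P^+3*Q^+2 - 10*A^+2*U*V^+7*S^+3*P^+2*Q^+3 + 8*A^+2*U*V^+7*S*P^+6*Q
    - 8*A^+2*U*V^+7*S*P^+5*Q^+2 - 8*A^+2*U*V^+7*S*P^+4*Q^+3 + 8*A^+2*U*V^+7*S*P^+3*Q^+4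
    - A^+2*V^+8*S^+4*P^+4 - 2*A^+2*V^+8*S^+4*P^+3*Q - A^+2*V^+8*S^+4*P^+2*Q^+2
    + 4*A^+2*V^+8*S^+2*P^+5*Q + 8*A^+2*V^+8*S^+2*P^+4*Q^+2 + 4*A^+2*V^+8*S^+2*P^+3*Q^+3
    - 6*A*c^+2*U^+8*S^+4*P^+2*Q^+2 + 2*A*c^+2*U^+8*S^+4*Q^+4 + 24*A*c^+2*U^+8*S^+2*P^+3*Q^+3
    - 8*A*c^+2*U^+8*S^+2*P*Q^+5 + 12*A*c^+2*U^+7*V*S^+5*P^+2*Q
    - 60*A*c^+2*U^+7*V*S^+3*P^+3*Q^+2 - 4*A*c^+2*U^+7*V*S^+3*P*Q^+4
    + 48*A*c^+2*U^+7*V*S*P^+4*Q^+3 + 16*A*c^+2*U^+7*V*S*P^+2*Q^+5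
    - 6*A*c^+2*U^+6*V^+2*S^+6*P^+2 - 4*A*c^+2*U^+6*V^+2*S^+6*Q^+2
    + 36*A*c^+2*U^+6*V^+2*S^+4*P^+3*Q + 28*A*c^+2*U^+6*V^+2*S^+4*P*Q^+3
    - 54*A*c^+2*U^+6*V^+2*S^+2*P^+4*Q^+2 - 36*A*c^+2*U^+6*V^+2*S^+2*P^+2*Q^+4
    - 6*A*c^+2*U^+6*V^+2*S^+2*Q^+6 + 24*A*c^+2*U^+6*V^+2*P^+5*Q^+3
    - 48*A*c^+2*U^+6*V^+2*P^+3*Q^+5 + 24*A*c^+2*U^+6*V^+2*P*Q^+7
    + 4*A*c^+2*U^+5*V^+3*S^+5*P*Q^+2 - 12*A*c^+2*U^+5*V^+3*S^+3*P^+4*Q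
    - 52*A*c^+2*U^+5*V^+3*S^+3*P^+2*Q^+3 + 48*A*c^+2*U^+5*V^+3*S*P^+5*Q^+2
    + 144*A*c^+2*U^+5*V^+3*S*P^+3*Q^+4 + 2*A*c^+2*U^+4*V^+4*S^+8
    - 20*A*c^+2*U^+4*V^+4*S^+6*P*Q + 12*A*c^+2*U^+4*V^+4*S^+4*P^+4
    + 80*A*c^+2*U^+4*V^+4*S^+4*P^+2*Q^+2 + 12*A*c^+2*U^+4*V^+4*S^+4*Q^+4
    - 60*A*c^+2*U^+4*V^+4*S^+2*P^+5*Q - 104*A*c^+2*U^+4*V^+4*S^+2*P^+3*Q^+3
    - 60*A*c^+2*U^+4*V^+4*S^+2*P*Q^+5 + 48*A*c^+2*U^+4*V^+4*P^+6*Q^+2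
    - 96*A*c^+2*U^+4*V^+4*P^+4*Q^+4 + 48*A*c^+2*U^+4*V^+4*P^+2*Q^+6
    + 4*A*c^+2*U^+3*V^+5*S^+5*P^+2*Q - 52*A*c^+2*U^+3*V^+5*S^+3*P^+3*Q^+2
    - 12*A*c^+2*U^+3*V^+5*S^+3*P*Q^+4 + 144*A*c^+2*U^+3*V^+5*S*P^+4*Q^+3
    + 48*A*c^+2*U^+3*V^+5*S*P^+2*Q^+5 - 4*A*c^+2*U^+2*V^+6*S^+6*P^+2
    - 6*A*c^+2*U^+2*V^+6*S^+6*Q^+2 + 28*A*c^+2*U^+2*V^+6*S^+4*P^+3*Q
    + 36*A*c^+2*U^+2*V^+6*S^+4*P*Q^+3 - 6*A*c^+2*U^+2*V^+6*S^+2*P^+6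
    - 36*A*c^+2*U^+2*V^+6*S^+2*P^+4*Q^+2 - 54*A*c^+2*U^+2*V^+6*S^+2*P^+2*Q^+4
    + 24*A*c^+2*U^+2*V^+6*P^+7*Q - 48*A*c^+2*U^+2*V^+6*P^+5*Q^+3
    + 24*A*c^+2*U^+2*V^+6*P^+3*Q^+5 + 12*A*c^+2*U*V^+7*S^+5*P*Q^+2
    - 4*A*c^+2*U*V^+7*S^+3*P^+4*Q - 60*A*c^+2*U*V^+7*S^+3*P^+2*Q^+3
    + 16*A*c^+2*U*V^+7*S*P^+5*Q^+2 + 48*A*c^+2*U*V^+7*S*P^+3*Q^+4 + 2*A*c^+2*V^+8*S^+4*P^+4
    - 6*A*c^+2*V^+8*S^+4*P^+2*Q^+2 - 8*A*c^+2*V^+8*S^+2*P^+5*Q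
    + 24*A*c^+2*V^+8*S^+2*P^+3*Q^+3 - c^+4*U^+8*S^+4*P^+2*Q^+2 + 2*c^+4*U^+8*S^+4*P*Q^+3
    - c^+4*U^+8*S^+4*Q^+4 + 4*c^+4*U^+8*S^+2*P^+3*Q^+3 - 8*c^+4*U^+8*S^+2*P^+2*Q^+4
    + 4*c^+4*U^+8*S^+2*P*Q^+5 + 2*c^+4*U^+7*V*S^+5*P^+2*Q - 2*c^+4*U^+7*V*S^+5*P*Q^+2
    - 10*c^+4*U^+7*V*S^+3*P^+3*Q^+2 + 6*c^+4*U^+7*V*S^+3*P^+2*Q^+3
    + 2*c^+4*U^+7*V*S^+3*P*Q^+4 + 2*c^+4*U^+7*V*S^+3*Q^+5 + 8*c^+4*U^+7*V*S*P^+4*Q^+3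
    + 8*c^+4*U^+7*V*S*P^+3*Q^+4 - 8*c^+4*U^+7*V*S*P^+2*Q^+5 - 8*c^+4*U^+7*V*S*P*Q^+6
    - c^+4*U^+6*V^+2*S^+6*P^+2 - 2*c^+4*U^+6*V^+2*S^+6*P*Q + 2*c^+4*U^+6*V^+2*S^+6*Q^+2
    + 6*c^+4*U^+6*V^+2*S^+4*P^+3*Q + 20*c^+4*U^+6*V^+2*S^+4*P^+2*Q^+2
    - 14*c^+4*U^+6*V^+2*S^+4*P*Q^+3 - 9*c^+4*U^+6*V^+2*S^+2*P^+4*Q^+2
    - 52*c^+4*U^+6*V^+2*S^+2*P^+3*Q^+3 + 18*c^+4*U^+6*V^+2*S^+2*P^+2*Q^+4
    - 4*c^+4*U^+6*V^+2*S^+2*P*Q^+5 - c^+4*U^+6*V^+2*S^+2*Q^+6 + 4*c^+4*U^+6*V^+2*P^+5*Q^+3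
    + 16*c^+4*U^+6*V^+2*P^+4*Q^+4 + 24*c^+4*U^+6*V^+2*P^+3*Q^+5
    + 16*c^+4*U^+6*V^+2*P^+2*Q^+6 + 4*c^+4*U^+6*V^+2*P*Q^+7 + 2*c^+4*U^+5*V^+3*S^+7*P
    - 18*c^+4*U^+5*V^+3*S^+5*P^+2*Q - 2*c^+4*U^+5*V^+3*S^+5*P*Q^+2
    - 4*c^+4*U^+5*V^+3*S^+5*Q^+3 - 2*c^+4*U^+5*V^+3*S^+3*P^+4*Q
    + 46*c^+4*U^+5*V^+3*S^+3*P^+3*Q^+2 + 26*c^+4*U^+5*V^+3*S^+3*P^+2*Q^+3
    + 26*c^+4*U^+5*V^+3*S^+3*P*Q^+4 + 8*c^+4*U^+5*V^+3*S*P^+5*Q^+2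
    - 24*c^+4*U^+5*V^+3*S*P^+4*Q^+3 - 72*c^+4*U^+5*V^+3*S*P^+3*Q^+4
    - 40*c^+4*U^+5*V^+3*S*P^+2*Q^+5 - c^+4*U^+4*V^+4*S^+8 + 10*c^+4*U^+4*V^+4*S^+6*P*Q
    + 2*c^+4*U^+4*V^+4*S^+4*P^+4 + 6*c^+4*U^+4*V^+4*S^+4*P^+3*Q
    - 40*c^+4*U^+4*V^+4*S^+4*P^+2*Q^+2 + 6*c^+4*U^+4*V^+4*S^+4*P*Q^+3
    + 2*c^+4*U^+4*V^+4*S^+4*Q^+4 - 10*c^+4*U^+4*V^+4*S^+2*P^+5*Q
    - 32*c^+4*U^+4*V^+4*S^+2*P^+4*Q^+2 + 52*c^+4*U^+4*V^+4*S^+2*P^+3*Q^+3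
    - 32*c^+4*U^+4*V^+4*S^+2*P^+2*Q^+4 - 10*c^+4*U^+4*V^+4*S^+2*P*Q^+5
    + 8*c^+4*U^+4*V^+4*P^+6*Q^+2 + 32*c^+4*U^+4*V^+4*P^+5*Q^+3 + 48*c^+4*U^+4*V^+4*P^+4*Q^+4
    + 32*c^+4*U^+4*V^+4*P^+3*Q^+5 + 8*c^+4*U^+4*V^+4*P^+2*Q^+6 + 2*c^+4*U^+3*V^+5*S^+7*Q
    - 4*c^+4*U^+3*V^+5*S^+5*P^+3 - 2*c^+4*U^+3*V^+5*S^+5*P^+2*Q
    - 18*c^+4*U^+3*V^+5*S^+5*P*Q^+2 + 26*c^+4*U^+3*V^+5*S^+3*P^+4*Q
    + 26*c^+4*U^+3*V^+5*S^+3*P^+3*Q^+2 + 46*c^+4*U^+3*V^+5*S^+3*P^+2*Q^+3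
    - 2*c^+4*U^+3*V^+5*S^+3*P*Q^+4 - 40*c^+4*U^+3*V^+5*S*P^+5*Q^+2
    - 72*c^+4*U^+3*V^+5*S*P^+4*Q^+3 - 24*c^+4*U^+3*V^+5*S*P^+3*Q^+4
    + 8*c^+4*U^+3*V^+5*S*P^+2*Q^+5 + 2*c^+4*U^+2*V^+6*S^+6*P^+2 - 2*c^+4*U^+2*V^+6*S^+6*P*Q
    - c^+4*U^+2*V^+6*S^+6*Q^+2 - 14*c^+4*U^+2*V^+6*S^+4*P^+3*Q
    + 20*c^+4*U^+2*V^+6*S^+4*P^+2*Q^+2 + 6*c^+4*U^+2*V^+6*S^+4*P*Q^+3
    - c^+4*U^+2*V^+6*S^+2*P^+6 - 4*c^+4*U^+2*V^+6*S^+2*P^+5*Q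
    + 18*c^+4*U^+2*V^+6*S^+2*P^+4*Q^+2 - 52*c^+4*U^+2*V^+6*S^+2*P^+3*Q^+3
    - 9*c^+4*U^+2*V^+6*S^+2*P^+2*Q^+4 + 4*c^+4*U^+2*V^+6*P^+7*Q
    + 16*c^+4*U^+2*V^+6*P^+6*Q^+2 + 24*c^+4*U^+2*V^+6*P^+5*Q^+3
    + 16*c^+4*U^+2*V^+6*P^+4*Q^+4 + 4*c^+4*U^+2*V^+6*P^+3*Q^+5 - 2*c^+4*U*V^+7*S^+5*P^+2*Q
    + 2*c^+4*U*V^+7*S^+5*P*Q^+2 + 2*c^+4*U*V^+7*S^+3*P^+5 + 2*c^+4*U*V^+7*S^+3*P^+4*Q
    + 6*c^+4*U*V^+7*S^+3*P^+3*Q^+2 - 10*c^+4*U*V^+7*S^+3*P^+2*Q^+3 - 8*c^+4*U*V^+7*S*P^+6*Q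
    - 8*c^+4*U*V^+7*S*P^+5*Q^+2 + 8*c^+4*U*V^+7*S*P^+4*Q^+3 + 8*c^+4*U*V^+7*S*P^+3*Q^+4
    - c^+4*V^+8*S^+4*P^+4 + 2*c^+4*V^+8*S^+4*P^+3*Q - c^+4*V^+8*S^+4*P^+2*Q^+2
    + 4*c^+4*V^+8*S^+2*P^+5*Q - 8*c^+4*V^+8*S^+2*P^+4*Q^+2 + 4*c^+4*V^+8*S^+2*P^+3*Q^+3.

Lemma power_poly_sym a c U V t2 t3 :
  power_poly a c U V t2 t3 = sym_cert a (a ^+ 2) c U V (t2 + t3) (t2 * t3) 1.
Proof. by rewrite /power_poly /sym_cert; ring. Qed.

Lemma sym_cert_hom a A c U V S P l :
  l ^+ 8 * sym_cert a A c U V S P 1 = sym_cert a A c U V (l * S) (l * P) l.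
Proof. by rewrite /sym_cert; ring. Qed.

(* The quotient of c^16 sym_cert (evaluated at the symmetric functions given by
   Vieta's relations) by caustic_poly; the division is exact. *)
Definition caustic_quot a A c U V K : R :=
    64*a*A^+6*c^+17*U^+22*V^+2*K^+5 + 512*a*A^+6*c^+17*U^+20*V^+4*K^+5
    + 1728*a*A^+6*c^+17*U^+18*V^+6*K^+5 + 3072*a*A^+6*c^+17*U^+16*V^+8*K^+5
    + 2688*a*A^+6*c^+17*U^+14*V^+10*K^+5 - 2688*a*A^+6*c^+17*U^+10*V^+14*K^+5
    - 3072*a*A^+6*c^+17*U^+8*V^+16*K^+5 - 1728*a*A^+6*c^+17*U^+6*V^+18*K^+5
    - 512*a*A^+6*c^+17*U^+4*V^+20*K^+5 - 64*a*A^+6*c^+17*U^+2*V^+22*K^+5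
    + 16*a*A^+5*c^+21*U^+22*V^+2*K^+6 + 128*a*A^+5*c^+21*U^+20*V^+4*K^+6
    + 432*a*A^+5*c^+21*U^+18*V^+6*K^+6 + 768*a*A^+5*c^+21*U^+16*V^+8*K^+6
    + 672*a*A^+5*c^+21*U^+14*V^+10*K^+6 - 672*a*A^+5*c^+21*U^+10*V^+14*K^+6
    - 768*a*A^+5*c^+21*U^+8*V^+16*K^+6 - 432*a*A^+5*c^+21*U^+6*V^+18*K^+6
    - 128*a*A^+5*c^+21*U^+4*V^+20*K^+6 - 16*a*A^+5*c^+21*U^+2*V^+22*K^+6
    - 160*a*A^+5*c^+19*U^+22*V^+2*K^+5 - 1024*a*A^+5*c^+19*U^+20*V^+4*K^+5
    - 2784*a*A^+5*c^+19*U^+18*V^+6*K^+5 - 4096*a*A^+5*c^+19*U^+16*V^+8*K^+5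
    - 3136*a*A^+5*c^+19*U^+14*V^+10*K^+5 + 3136*a*A^+5*c^+19*U^+10*V^+14*K^+5
    + 4096*a*A^+5*c^+19*U^+8*V^+16*K^+5 + 2784*a*A^+5*c^+19*U^+6*V^+18*K^+5
    + 1024*a*A^+5*c^+19*U^+4*V^+20*K^+5 + 160*a*A^+5*c^+19*U^+2*V^+22*K^+5
    - 112*a*A^+5*c^+17*U^+22*V^+2*K^+4 - 896*a*A^+5*c^+17*U^+20*V^+4*K^+4
    - 3024*a*A^+5*c^+17*U^+18*V^+6*K^+4 - 5376*a*A^+5*c^+17*U^+16*V^+8*K^+4
    - 4704*a*A^+5*c^+17*U^+14*V^+10*K^+4 + 4704*a*A^+5*c^+17*U^+10*V^+14*K^+4
    + 5376*a*A^+5*c^+17*U^+8*V^+16*K^+4 + 3024*a*A^+5*c^+17*U^+6*V^+18*K^+4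
    + 896*a*A^+5*c^+17*U^+4*V^+20*K^+4 + 112*a*A^+5*c^+17*U^+2*V^+22*K^+4
    - 32*a*A^+4*c^+23*U^+22*V^+2*K^+6 - 192*a*A^+4*c^+23*U^+20*V^+4*K^+6
    - 480*a*A^+4*c^+23*U^+18*V^+6*K^+6 - 640*a*A^+4*c^+23*U^+16*V^+8*K^+6
    - 448*a*A^+4*c^+23*U^+14*V^+10*K^+6 + 448*a*A^+4*c^+23*U^+10*V^+14*K^+6
    + 640*a*A^+4*c^+23*U^+8*V^+16*K^+6 + 480*a*A^+4*c^+23*U^+6*V^+18*K^+6
    + 192*a*A^+4*c^+23*U^+4*V^+20*K^+6 + 32*a*A^+4*c^+23*U^+2*V^+22*K^+6
    + 48*a*A^+4*c^+21*U^+22*V^+2*K^+5 + 512*a*A^+4*c^+21*U^+20*V^+4*K^+5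
    + 1040*a*A^+4*c^+21*U^+18*V^+6*K^+5 - 1312*a*A^+4*c^+21*U^+14*V^+10*K^+5
    + 1312*a*A^+4*c^+21*U^+10*V^+14*K^+5 - 1040*a*A^+4*c^+21*U^+6*V^+18*K^+5
    - 512*a*A^+4*c^+21*U^+4*V^+20*K^+5 - 48*a*A^+4*c^+21*U^+2*V^+22*K^+5
    + 256*a*A^+4*c^+19*U^+22*V^+2*K^+4 + 1344*a*A^+4*c^+19*U^+20*V^+4*K^+4
    + 2688*a*A^+4*c^+19*U^+18*V^+6*K^+4 + 2432*a*A^+4*c^+19*U^+16*V^+8*K^+4
    + 896*a*A^+4*c^+19*U^+14*V^+10*K^+4 - 896*a*A^+4*c^+19*U^+10*V^+14*K^+4
    - 2432*a*A^+4*c^+19*U^+8*V^+16*K^+4 - 2688*a*A^+4*c^+19*U^+6*V^+18*K^+4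
    - 1344*a*A^+4*c^+19*U^+4*V^+20*K^+4 - 256*a*A^+4*c^+19*U^+2*V^+22*K^+4
    + 48*a*A^+4*c^+17*U^+22*V^+2*K^+3 + 384*a*A^+4*c^+17*U^+20*V^+4*K^+3
    + 1296*a*A^+4*c^+17*U^+18*V^+6*K^+3 + 2304*a*A^+4*c^+17*U^+16*V^+8*K^+3
    + 2016*a*A^+4*c^+17*U^+14*V^+10*K^+3 - 2016*a*A^+4*c^+17*U^+10*V^+14*K^+3
    - 2304*a*A^+4*c^+17*U^+8*V^+16*K^+3 - 1296*a*A^+4*c^+17*U^+6*V^+18*K^+3
    - 384*a*A^+4*c^+17*U^+4*V^+20*K^+3 - 48*a*A^+4*c^+17*U^+2*V^+22*K^+3
    + 64*a*A^+3*c^+25*U^+20*V^+4*K^+6 + 128*a*A^+3*c^+25*U^+18*V^+6*K^+6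
    - 128*a*A^+3*c^+25*U^+16*V^+8*K^+6 - 384*a*A^+3*c^+25*U^+14*V^+10*K^+6
    + 384*a*A^+3*c^+25*U^+10*V^+14*K^+6 + 128*a*A^+3*c^+25*U^+8*V^+16*K^+6
    - 128*a*A^+3*c^+25*U^+6*V^+18*K^+6 - 64*a*A^+3*c^+25*U^+4*V^+20*K^+6
    + 160*a*A^+3*c^+23*U^+22*V^+2*K^+5 - 256*a*A^+3*c^+23*U^+20*V^+4*K^+5
    - 288*a*A^+3*c^+23*U^+18*V^+6*K^+5 + 512*a*A^+3*c^+23*U^+16*V^+8*K^+5
    + 64*a*A^+3*c^+23*U^+14*V^+10*K^+5 - 64*a*A^+3*c^+23*U^+10*V^+14*K^+5
    - 512*a*A^+3*c^+23*U^+8*V^+16*K^+5 + 288*a*A^+3*c^+23*U^+6*V^+18*K^+5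
    + 256*a*A^+3*c^+23*U^+4*V^+20*K^+5 - 160*a*A^+3*c^+23*U^+2*V^+22*K^+5
    - 64*a*A^+3*c^+21*U^+22*V^+2*K^+4 - 448*a*A^+3*c^+21*U^+20*V^+4*K^+4
    - 576*a*A^+3*c^+21*U^+18*V^+6*K^+4 + 896*a*A^+3*c^+21*U^+16*V^+8*K^+4
    + 2048*a*A^+3*c^+21*U^+14*V^+10*K^+4 - 2048*a*A^+3*c^+21*U^+10*V^+14*K^+4
    - 896*a*A^+3*c^+21*U^+8*V^+16*K^+4 + 576*a*A^+3*c^+21*U^+6*V^+18*K^+4
    + 448*a*A^+3*c^+21*U^+4*V^+20*K^+4 + 64*a*A^+3*c^+21*U^+2*V^+22*K^+4
    - 96*a*A^+3*c^+19*U^+22*V^+2*K^+3 - 384*a*A^+3*c^+19*U^+20*V^+4*K^+3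
    - 288*a*A^+3*c^+19*U^+18*V^+6*K^+3 + 768*a*A^+3*c^+19*U^+16*V^+8*K^+3
    + 1344*a*A^+3*c^+19*U^+14*V^+10*K^+3 - 1344*a*A^+3*c^+19*U^+10*V^+14*K^+3
    - 768*a*A^+3*c^+19*U^+8*V^+16*K^+3 + 288*a*A^+3*c^+19*U^+6*V^+18*K^+3
    + 384*a*A^+3*c^+19*U^+4*V^+20*K^+3 + 96*a*A^+3*c^+19*U^+2*V^+22*K^+3
    + 32*a*A^+2*c^+27*U^+22*V^+2*K^+6 - 64*a*A^+2*c^+27*U^+20*V^+4*K^+6
    - 32*a*A^+2*c^+27*U^+18*V^+6*K^+6 + 128*a*A^+2*c^+27*U^+16*V^+8*K^+6
    - 64*a*A^+2*c^+27*U^+14*V^+10*K^+6 + 64*a*A^+2*c^+27*U^+10*V^+14*K^+6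
    - 128*a*A^+2*c^+27*U^+8*V^+16*K^+6 + 32*a*A^+2*c^+27*U^+6*V^+18*K^+6
    + 64*a*A^+2*c^+27*U^+4*V^+20*K^+6 - 32*a*A^+2*c^+27*U^+2*V^+22*K^+6
    - 128*a*A^+2*c^+25*U^+22*V^+2*K^+5 + 384*a*A^+2*c^+25*U^+20*V^+4*K^+5
    - 128*a*A^+2*c^+25*U^+18*V^+6*K^+5 - 768*a*A^+2*c^+25*U^+16*V^+8*K^+5
    + 1024*a*A^+2*c^+25*U^+14*V^+10*K^+5 - 1024*a*A^+2*c^+25*U^+10*V^+14*K^+5
    + 768*a*A^+2*c^+25*U^+8*V^+16*K^+5 + 128*a*A^+2*c^+25*U^+6*V^+18*K^+5
    - 384*a*A^+2*c^+25*U^+4*V^+20*K^+5 + 128*a*A^+2*c^+25*U^+2*V^+22*K^+5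
    - 224*a*A^+2*c^+23*U^+22*V^+2*K^+4 + 704*a*A^+2*c^+23*U^+20*V^+4*K^+4
    - 288*a*A^+2*c^+23*U^+18*V^+6*K^+4 - 1408*a*A^+2*c^+23*U^+16*V^+8*K^+4
    + 1984*a*A^+2*c^+23*U^+14*V^+10*K^+4 - 1984*a*A^+2*c^+23*U^+10*V^+14*K^+4
    + 1408*a*A^+2*c^+23*U^+8*V^+16*K^+4 + 288*a*A^+2*c^+23*U^+6*V^+18*K^+4
    - 704*a*A^+2*c^+23*U^+4*V^+20*K^+4 + 224*a*A^+2*c^+23*U^+2*V^+22*K^+4
    - 16*a*A*c^+29*U^+22*V^+2*K^+6 + 64*a*A*c^+29*U^+20*V^+4*K^+6
    - 48*a*A*c^+29*U^+18*V^+6*K^+6 - 128*a*A*c^+29*U^+16*V^+8*K^+6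
    + 224*a*A*c^+29*U^+14*V^+10*K^+6 - 224*a*A*c^+29*U^+10*V^+14*K^+6
    + 128*a*A*c^+29*U^+8*V^+16*K^+6 + 48*a*A*c^+29*U^+6*V^+18*K^+6
    - 64*a*A*c^+29*U^+4*V^+20*K^+6 + 16*a*A*c^+29*U^+2*V^+22*K^+6
    + 176*a*A*c^+25*U^+22*V^+2*K^+4 - 960*a*A*c^+25*U^+20*V^+4*K^+4
    + 2064*a*A*c^+25*U^+18*V^+6*K^+4 - 2176*a*A*c^+25*U^+16*V^+8*K^+4
    + 1120*a*A*c^+25*U^+14*V^+10*K^+4 - 1120*a*A*c^+25*U^+10*V^+14*K^+4
    + 2176*a*A*c^+25*U^+8*V^+16*K^+4 - 2064*a*A*c^+25*U^+6*V^+18*K^+4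
    + 960*a*A*c^+25*U^+4*V^+20*K^+4 - 176*a*A*c^+25*U^+2*V^+22*K^+4
    + 96*a*A*c^+23*U^+22*V^+2*K^+3 - 384*a*A*c^+23*U^+20*V^+4*K^+3
    + 288*a*A*c^+23*U^+18*V^+6*K^+3 + 768*a*A*c^+23*U^+16*V^+8*K^+3
    - 1344*a*A*c^+23*U^+14*V^+10*K^+3 + 1344*a*A*c^+23*U^+10*V^+14*K^+3
    - 768*a*A*c^+23*U^+8*V^+16*K^+3 - 288*a*A*c^+23*U^+6*V^+18*K^+3
    + 384*a*A*c^+23*U^+4*V^+20*K^+3 - 96*a*A*c^+23*U^+2*V^+22*K^+3
    + 16*a*c^+29*U^+22*V^+2*K^+5 - 128*a*c^+29*U^+20*V^+4*K^+5 + 432*a*c^+29*U^+18*V^+6*K^+5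
    - 768*a*c^+29*U^+16*V^+8*K^+5 + 672*a*c^+29*U^+14*V^+10*K^+5
    - 672*a*c^+29*U^+10*V^+14*K^+5 + 768*a*c^+29*U^+8*V^+16*K^+5
    - 432*a*c^+29*U^+6*V^+18*K^+5 + 128*a*c^+29*U^+4*V^+20*K^+5 - 16*a*c^+29*U^+2*V^+22*K^+5
    - 32*a*c^+27*U^+22*V^+2*K^+4 + 256*a*c^+27*U^+20*V^+4*K^+4 - 864*a*c^+27*U^+18*V^+6*K^+4
    + 1536*a*c^+27*U^+16*V^+8*K^+4 - 1344*a*c^+27*U^+14*V^+10*K^+4
    + 1344*a*c^+27*U^+10*V^+14*K^+4 - 1536*a*c^+27*U^+8*V^+16*K^+4
    + 864*a*c^+27*U^+6*V^+18*K^+4 - 256*a*c^+27*U^+4*V^+20*K^+4 + 32*a*c^+27*U^+2*V^+22*K^+4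
    - 48*a*c^+25*U^+22*V^+2*K^+3 + 384*a*c^+25*U^+20*V^+4*K^+3
    - 1296*a*c^+25*U^+18*V^+6*K^+3 + 2304*a*c^+25*U^+16*V^+8*K^+3
    - 2016*a*c^+25*U^+14*V^+10*K^+3 + 2016*a*c^+25*U^+10*V^+14*K^+3
    - 2304*a*c^+25*U^+8*V^+16*K^+3 + 1296*a*c^+25*U^+6*V^+18*K^+3
    - 384*a*c^+25*U^+4*V^+20*K^+3 + 48*a*c^+25*U^+2*V^+22*K^+3
    - 16*A^+7*c^+16*U^+22*V^+2*K^+5 - 160*A^+7*c^+16*U^+20*V^+4*K^+5
    - 720*A^+7*c^+16*U^+18*V^+6*K^+5 - 1920*A^+7*c^+16*U^+16*V^+8*K^+5
    - 3360*A^+7*c^+16*U^+14*V^+10*K^+5 - 4032*A^+7*c^+16*U^+12*V^+12*K^+5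
    - 3360*A^+7*c^+16*U^+10*V^+14*K^+5 - 1920*A^+7*c^+16*U^+8*V^+16*K^+5
    - 720*A^+7*c^+16*U^+6*V^+18*K^+5 - 160*A^+7*c^+16*U^+4*V^+20*K^+5
    - 16*A^+7*c^+16*U^+2*V^+22*K^+5 - 4*A^+6*c^+20*U^+22*V^+2*K^+6
    - 40*A^+6*c^+20*U^+20*V^+4*K^+6 - 180*A^+6*c^+20*U^+18*V^+6*K^+6
    - 480*A^+6*c^+20*U^+16*V^+8*K^+6 - 840*A^+6*c^+20*U^+14*V^+10*K^+6
    - 1008*A^+6*c^+20*U^+12*V^+12*K^+6 - 840*A^+6*c^+20*U^+10*V^+14*K^+6
    - 480*A^+6*c^+20*U^+8*V^+16*K^+6 - 180*A^+6*c^+20*U^+6*V^+18*K^+6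
    - 40*A^+6*c^+20*U^+4*V^+20*K^+6 - 4*A^+6*c^+20*U^+2*V^+22*K^+6
    - 40*A^+6*c^+18*U^+22*V^+2*K^+5 - 144*A^+6*c^+18*U^+20*V^+4*K^+5
    + 248*A^+6*c^+18*U^+18*V^+6*K^+5 + 2368*A^+6*c^+18*U^+16*V^+8*K^+5
    + 5936*A^+6*c^+18*U^+14*V^+10*K^+5 + 7840*A^+6*c^+18*U^+12*V^+12*K^+5
    + 5936*A^+6*c^+18*U^+10*V^+14*K^+5 + 2368*A^+6*c^+18*U^+8*V^+16*K^+5
    + 248*A^+6*c^+18*U^+6*V^+18*K^+5 - 144*A^+6*c^+18*U^+4*V^+20*K^+5
    - 40*A^+6*c^+18*U^+2*V^+22*K^+5 + 28*A^+6*c^+16*U^+22*V^+2*K^+4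
    + 280*A^+6*c^+16*U^+20*V^+4*K^+4 + 1260*A^+6*c^+16*U^+18*V^+6*K^+4
    + 3360*A^+6*c^+16*U^+16*V^+8*K^+4 + 5880*A^+6*c^+16*U^+14*V^+10*K^+4
    + 7056*A^+6*c^+16*U^+12*V^+12*K^+4 + 5880*A^+6*c^+16*U^+10*V^+14*K^+4
    + 3360*A^+6*c^+16*U^+8*V^+16*K^+4 + 1260*A^+6*c^+16*U^+6*V^+18*K^+4
    + 280*A^+6*c^+16*U^+4*V^+20*K^+4 + 28*A^+6*c^+16*U^+2*V^+22*K^+4
    - 12*A^+5*c^+22*U^+22*V^+2*K^+6 - 56*A^+5*c^+22*U^+20*V^+4*K^+6
    - 28*A^+5*c^+22*U^+18*V^+6*K^+6 + 352*A^+5*c^+22*U^+16*V^+8*K^+6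
    + 1064*A^+5*c^+22*U^+14*V^+10*K^+6 + 1456*A^+5*c^+22*U^+12*V^+12*K^+6
    + 1064*A^+5*c^+22*U^+10*V^+14*K^+6 + 352*A^+5*c^+22*U^+8*V^+16*K^+6
    - 28*A^+5*c^+22*U^+6*V^+18*K^+6 - 56*A^+5*c^+22*U^+4*V^+20*K^+6
    - 12*A^+5*c^+22*U^+2*V^+22*K^+6 + 252*A^+5*c^+20*U^+22*V^+2*K^+5
    + 856*A^+5*c^+20*U^+20*V^+4*K^+5 + 588*A^+5*c^+20*U^+18*V^+6*K^+5
    - 992*A^+5*c^+20*U^+16*V^+8*K^+5 - 1864*A^+5*c^+20*U^+14*V^+10*K^+5
    - 1776*A^+5*c^+20*U^+12*V^+12*K^+5 - 1864*A^+5*c^+20*U^+10*V^+14*K^+5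
    - 992*A^+5*c^+20*U^+8*V^+16*K^+5 + 588*A^+5*c^+20*U^+6*V^+18*K^+5
    + 856*A^+5*c^+20*U^+4*V^+20*K^+5 + 252*A^+5*c^+20*U^+2*V^+22*K^+5
    + 76*A^+5*c^+18*U^+22*V^+2*K^+4 + 376*A^+5*c^+18*U^+20*V^+4*K^+4
    + 348*A^+5*c^+18*U^+18*V^+6*K^+4 - 1632*A^+5*c^+18*U^+16*V^+8*K^+4
    - 5544*A^+5*c^+18*U^+14*V^+10*K^+4 - 7728*A^+5*c^+18*U^+12*V^+12*K^+4
    - 5544*A^+5*c^+18*U^+10*V^+14*K^+4 - 1632*A^+5*c^+18*U^+8*V^+16*K^+4
    + 348*A^+5*c^+18*U^+6*V^+18*K^+4 + 376*A^+5*c^+18*U^+4*V^+20*K^+4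
    + 76*A^+5*c^+18*U^+2*V^+22*K^+4 - 12*A^+5*c^+16*U^+22*V^+2*K^+3
    - 120*A^+5*c^+16*U^+20*V^+4*K^+3 - 540*A^+5*c^+16*U^+18*V^+6*K^+3
    - 1440*A^+5*c^+16*U^+16*V^+8*K^+3 - 2520*A^+5*c^+16*U^+14*V^+10*K^+3
    - 3024*A^+5*c^+16*U^+12*V^+12*K^+3 - 2520*A^+5*c^+16*U^+10*V^+14*K^+3
    - 1440*A^+5*c^+16*U^+8*V^+16*K^+3 - 540*A^+5*c^+16*U^+6*V^+18*K^+3
    - 120*A^+5*c^+16*U^+4*V^+20*K^+3 - 12*A^+5*c^+16*U^+2*V^+22*K^+3
    + 56*A^+4*c^+24*U^+22*V^+2*K^+6 + 176*A^+4*c^+24*U^+20*V^+4*K^+6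
    + 88*A^+4*c^+24*U^+18*V^+6*K^+6 - 192*A^+4*c^+24*U^+16*V^+8*K^+6
    - 144*A^+4*c^+24*U^+14*V^+10*K^+6 + 32*A^+4*c^+24*U^+12*V^+12*K^+6
    - 144*A^+4*c^+24*U^+10*V^+14*K^+6 - 192*A^+4*c^+24*U^+8*V^+16*K^+6
    + 88*A^+4*c^+24*U^+6*V^+18*K^+6 + 176*A^+4*c^+24*U^+4*V^+20*K^+6
    + 56*A^+4*c^+24*U^+2*V^+22*K^+6 - 324*A^+4*c^+22*U^+22*V^+2*K^+5
    - 472*A^+4*c^+22*U^+20*V^+4*K^+5 + 652*A^+4*c^+22*U^+18*V^+6*K^+5
    + 1248*A^+4*c^+22*U^+16*V^+8*K^+5 - 328*A^+4*c^+22*U^+14*V^+10*K^+5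
    - 1552*A^+4*c^+22*U^+12*V^+12*K^+5 - 328*A^+4*c^+22*U^+10*V^+14*K^+5
    + 1248*A^+4*c^+22*U^+8*V^+16*K^+5 + 652*A^+4*c^+22*U^+6*V^+18*K^+5
    - 472*A^+4*c^+22*U^+4*V^+20*K^+5 - 324*A^+4*c^+22*U^+2*V^+22*K^+5
    - 416*A^+4*c^+20*U^+22*V^+2*K^+4 - 1120*A^+4*c^+20*U^+20*V^+4*K^+4
    + 96*A^+4*c^+20*U^+18*V^+6*K^+4 + 2176*A^+4*c^+20*U^+16*V^+8*K^+4
    + 320*A^+4*c^+20*U^+14*V^+10*K^+4 - 2112*A^+4*c^+20*U^+12*V^+12*K^+4
    + 320*A^+4*c^+20*U^+10*V^+14*K^+4 + 2176*A^+4*c^+20*U^+8*V^+16*K^+4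
    + 96*A^+4*c^+20*U^+6*V^+18*K^+4 - 1120*A^+4*c^+20*U^+4*V^+20*K^+4
    - 416*A^+4*c^+20*U^+2*V^+22*K^+4 - 36*A^+4*c^+18*U^+22*V^+2*K^+3
    - 216*A^+4*c^+18*U^+20*V^+4*K^+3 - 468*A^+4*c^+18*U^+18*V^+6*K^+3
    - 288*A^+4*c^+18*U^+16*V^+8*K^+3 + 504*A^+4*c^+18*U^+14*V^+10*K^+3
    + 1008*A^+4*c^+18*U^+12*V^+12*K^+3 + 504*A^+4*c^+18*U^+10*V^+14*K^+3
    - 288*A^+4*c^+18*U^+8*V^+16*K^+3 - 468*A^+4*c^+18*U^+6*V^+18*K^+3
    - 216*A^+4*c^+18*U^+4*V^+20*K^+3 - 36*A^+4*c^+18*U^+2*V^+22*K^+3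
    - 56*A^+3*c^+26*U^+22*V^+2*K^+6 - 48*A^+3*c^+26*U^+20*V^+4*K^+6
    + 168*A^+3*c^+26*U^+18*V^+6*K^+6 + 192*A^+3*c^+26*U^+16*V^+8*K^+6
    - 112*A^+3*c^+26*U^+14*V^+10*K^+6 - 288*A^+3*c^+26*U^+12*V^+12*K^+6
    - 112*A^+3*c^+26*U^+10*V^+14*K^+6 + 192*A^+3*c^+26*U^+8*V^+16*K^+6
    + 168*A^+3*c^+26*U^+6*V^+18*K^+6 - 48*A^+3*c^+26*U^+4*V^+20*K^+6
    - 56*A^+3*c^+26*U^+2*V^+22*K^+6 + 104*A^+3*c^+24*U^+22*V^+2*K^+5
    - 48*A^+3*c^+24*U^+20*V^+4*K^+5 - 568*A^+3*c^+24*U^+18*V^+6*K^+5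
    + 704*A^+3*c^+24*U^+16*V^+8*K^+5 + 464*A^+3*c^+24*U^+14*V^+10*K^+5
    - 1312*A^+3*c^+24*U^+12*V^+12*K^+5 + 464*A^+3*c^+24*U^+10*V^+14*K^+5
    + 704*A^+3*c^+24*U^+8*V^+16*K^+5 - 568*A^+3*c^+24*U^+6*V^+18*K^+5
    - 48*A^+3*c^+24*U^+4*V^+20*K^+5 + 104*A^+3*c^+24*U^+2*V^+22*K^+5
    + 504*A^+3*c^+22*U^+22*V^+2*K^+4 - 80*A^+3*c^+22*U^+20*V^+4*K^+4
    - 1512*A^+3*c^+22*U^+18*V^+6*K^+4 + 320*A^+3*c^+22*U^+16*V^+8*K^+4
    + 1008*A^+3*c^+22*U^+14*V^+10*K^+4 - 480*A^+3*c^+22*U^+12*V^+12*K^+4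
    + 1008*A^+3*c^+22*U^+10*V^+14*K^+4 + 320*A^+3*c^+22*U^+8*V^+16*K^+4
    - 1512*A^+3*c^+22*U^+6*V^+18*K^+4 - 80*A^+3*c^+22*U^+4*V^+20*K^+4
    + 504*A^+3*c^+22*U^+2*V^+22*K^+4 + 168*A^+3*c^+20*U^+22*V^+2*K^+3
    + 336*A^+3*c^+20*U^+20*V^+4*K^+3 - 504*A^+3*c^+20*U^+18*V^+6*K^+3
    - 1344*A^+3*c^+20*U^+16*V^+8*K^+3 + 336*A^+3*c^+20*U^+14*V^+10*K^+3
    + 2016*A^+3*c^+20*U^+12*V^+12*K^+3 + 336*A^+3*c^+20*U^+10*V^+14*K^+3
    - 1344*A^+3*c^+20*U^+8*V^+16*K^+3 - 504*A^+3*c^+20*U^+6*V^+18*K^+3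
    + 336*A^+3*c^+20*U^+4*V^+20*K^+3 + 168*A^+3*c^+20*U^+2*V^+22*K^+3
    + 12*A^+2*c^+28*U^+22*V^+2*K^+6 - 8*A^+2*c^+28*U^+20*V^+4*K^+6
    - 100*A^+2*c^+28*U^+18*V^+6*K^+6 + 160*A^+2*c^+28*U^+16*V^+8*K^+6
    + 88*A^+2*c^+28*U^+14*V^+10*K^+6 - 304*A^+2*c^+28*U^+12*V^+12*K^+6
    + 88*A^+2*c^+28*U^+10*V^+14*K^+6 + 160*A^+2*c^+28*U^+8*V^+16*K^+6
    - 100*A^+2*c^+28*U^+6*V^+18*K^+6 - 8*A^+2*c^+28*U^+4*V^+20*K^+6
    + 12*A^+2*c^+28*U^+2*V^+22*K^+6 + 48*A^+2*c^+26*U^+22*V^+2*K^+5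
    - 192*A^+2*c^+26*U^+20*V^+4*K^+5 + 240*A^+2*c^+26*U^+18*V^+6*K^+5
    - 288*A^+2*c^+26*U^+14*V^+10*K^+5 + 384*A^+2*c^+26*U^+12*V^+12*K^+5
    - 288*A^+2*c^+26*U^+10*V^+14*K^+5 + 240*A^+2*c^+26*U^+6*V^+18*K^+5
    - 192*A^+2*c^+26*U^+4*V^+20*K^+5 + 48*A^+2*c^+26*U^+2*V^+22*K^+5
    - 196*A^+2*c^+24*U^+22*V^+2*K^+4 + 536*A^+2*c^+24*U^+20*V^+4*K^+4
    + 12*A^+2*c^+24*U^+18*V^+6*K^+4 - 992*A^+2*c^+24*U^+16*V^+8*K^+4
    + 184*A^+2*c^+24*U^+14*V^+10*K^+4 + 912*A^+2*c^+24*U^+12*V^+12*K^+4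
    + 184*A^+2*c^+24*U^+10*V^+14*K^+4 - 992*A^+2*c^+24*U^+8*V^+16*K^+4
    + 12*A^+2*c^+24*U^+6*V^+18*K^+4 + 536*A^+2*c^+24*U^+4*V^+20*K^+4
    - 196*A^+2*c^+24*U^+2*V^+22*K^+4 - 168*A^+2*c^+22*U^+22*V^+2*K^+3
    + 336*A^+2*c^+22*U^+20*V^+4*K^+3 + 504*A^+2*c^+22*U^+18*V^+6*K^+3
    - 1344*A^+2*c^+22*U^+16*V^+8*K^+3 - 336*A^+2*c^+22*U^+14*V^+10*K^+3
    + 2016*A^+2*c^+22*U^+12*V^+12*K^+3 - 336*A^+2*c^+22*U^+10*V^+14*K^+3
    - 1344*A^+2*c^+22*U^+8*V^+16*K^+3 + 504*A^+2*c^+22*U^+6*V^+18*K^+3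
    + 336*A^+2*c^+22*U^+4*V^+20*K^+3 - 168*A^+2*c^+22*U^+2*V^+22*K^+3
    + 4*A*c^+30*U^+22*V^+2*K^+6 - 24*A*c^+30*U^+20*V^+4*K^+6 + 52*A*c^+30*U^+18*V^+6*K^+6
    - 32*A*c^+30*U^+16*V^+8*K^+6 - 56*A*c^+30*U^+14*V^+10*K^+6
    + 112*A*c^+30*U^+12*V^+12*K^+6 - 56*A*c^+30*U^+10*V^+14*K^+6
    - 32*A*c^+30*U^+8*V^+16*K^+6 + 52*A*c^+30*U^+6*V^+18*K^+6 - 24*A*c^+30*U^+4*V^+20*K^+6
    + 4*A*c^+30*U^+2*V^+22*K^+6 - 20*A*c^+28*U^+22*V^+2*K^+5 + 120*A*c^+28*U^+20*V^+4*K^+5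
    - 260*A*c^+28*U^+18*V^+6*K^+5 + 160*A*c^+28*U^+16*V^+8*K^+5
    + 280*A*c^+28*U^+14*V^+10*K^+5 - 560*A*c^+28*U^+12*V^+12*K^+5
    + 280*A*c^+28*U^+10*V^+14*K^+5 + 160*A*c^+28*U^+8*V^+16*K^+5
    - 260*A*c^+28*U^+6*V^+18*K^+5 + 120*A*c^+28*U^+4*V^+20*K^+5 - 20*A*c^+28*U^+2*V^+22*K^+5
    - 4*A*c^+26*U^+22*V^+2*K^+4 + 88*A*c^+26*U^+20*V^+4*K^+4 - 564*A*c^+26*U^+18*V^+6*K^+4
    + 1824*A*c^+26*U^+16*V^+8*K^+4 - 3528*A*c^+26*U^+14*V^+10*K^+4
    + 4368*A*c^+26*U^+12*V^+12*K^+4 - 3528*A*c^+26*U^+10*V^+14*K^+4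
    + 1824*A*c^+26*U^+8*V^+16*K^+4 - 564*A*c^+26*U^+6*V^+18*K^+4
    + 88*A*c^+26*U^+4*V^+20*K^+4 - 4*A*c^+26*U^+2*V^+22*K^+4 + 36*A*c^+24*U^+22*V^+2*K^+3
    - 216*A*c^+24*U^+20*V^+4*K^+3 + 468*A*c^+24*U^+18*V^+6*K^+3
    - 288*A*c^+24*U^+16*V^+8*K^+3 - 504*A*c^+24*U^+14*V^+10*K^+3
    + 1008*A*c^+24*U^+12*V^+12*K^+3 - 504*A*c^+24*U^+10*V^+14*K^+3
    - 288*A*c^+24*U^+8*V^+16*K^+3 + 468*A*c^+24*U^+6*V^+18*K^+3
    - 216*A*c^+24*U^+4*V^+20*K^+3 + 36*A*c^+24*U^+2*V^+22*K^+3 - 4*c^+30*U^+22*V^+2*K^+5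
    + 40*c^+30*U^+20*V^+4*K^+5 - 180*c^+30*U^+18*V^+6*K^+5 + 480*c^+30*U^+16*V^+8*K^+5
    - 840*c^+30*U^+14*V^+10*K^+5 + 1008*c^+30*U^+12*V^+12*K^+5 - 840*c^+30*U^+10*V^+14*K^+5
    + 480*c^+30*U^+8*V^+16*K^+5 - 180*c^+30*U^+6*V^+18*K^+5 + 40*c^+30*U^+4*V^+20*K^+5
    - 4*c^+30*U^+2*V^+22*K^+5 + 8*c^+28*U^+22*V^+2*K^+4 - 80*c^+28*U^+20*V^+4*K^+4
    + 360*c^+28*U^+18*V^+6*K^+4 - 960*c^+28*U^+16*V^+8*K^+4 + 1680*c^+28*U^+14*V^+10*K^+4
    - 2016*c^+28*U^+12*V^+12*K^+4 + 1680*c^+28*U^+10*V^+14*K^+4 - 960*c^+28*U^+8*V^+16*K^+4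
    + 360*c^+28*U^+6*V^+18*K^+4 - 80*c^+28*U^+4*V^+20*K^+4 + 8*c^+28*U^+2*V^+22*K^+4
    + 12*c^+26*U^+22*V^+2*K^+3 - 120*c^+26*U^+20*V^+4*K^+3 + 540*c^+26*U^+18*V^+6*K^+3
    - 1440*c^+26*U^+16*V^+8*K^+3 + 2520*c^+26*U^+14*V^+10*K^+3 - 3024*c^+26*U^+12*V^+12*K^+3
    + 2520*c^+26*U^+10*V^+14*K^+3 - 1440*c^+26*U^+8*V^+16*K^+3 + 540*c^+26*U^+6*V^+18*K^+3
    - 120*c^+26*U^+4*V^+20*K^+3 + 12*c^+26*U^+2*V^+22*K^+3.

Lemma sym_cert_caustic a A c K U V :
  c ^+ 16 * sym_cert a A c U V (- chord_mid c K U V) (chord_const A c K U V) (chord_lead A c K U V)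
  = caustic_quot a A c U V K * caustic_poly A c K.
Proof. by rewrite /sym_cert /caustic_quot /caustic_poly /chord_mid /chord_const /chord_lead; ring. Qed.

Lemma power_poly_eq0 a c K U V t2 t3 :
  0 < c -> c < a -> 0 < K -> U ^+ 2 + V ^+ 2 != 0 -> t2 != t3 ->
  chord_poly a c K U V t2 1 = 0 -> chord_poly a c K U V t3 1 = 0 ->
  chord_poly a c K t2 1 t3 1 = 0 -> power_poly a c U V t2 t3 = 0.
Proof.
move=> c0 ca K0 nz t23 h2 h3 h23; rewrite !chord_poly_quadratic in h2 h3.
have [sum prod] := vieta t23 h2 h3.
have caus := caustic_relation c0 ca K0 nz sum prod h23.
have lead0 : chord_lead (a ^+ 2) c K U V != 0.
  apply/eqP => l0; move: (chord_mid_neq0 c0 ca K0 nz caus l0).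
  by rewrite -oppr_eq0 -sum l0 mul0r eqxx.
have : c ^+ 16 * (chord_lead (a ^+ 2) c K U V ^+ 8 * power_poly a c U V t2 t3) = 0.
  by rewrite power_poly_sym sym_cert_hom sum prod sym_cert_caustic caus mulr0.
move/eqP; rewrite mulf_eq0 expf_eq0 (gt_eqF c0) andbF /=.
by rewrite mulf_eq0 expf_eq0 (negbTE lead0) andbF /= => /eqP.
Qed.

End Core.

Section Numerator.
Variable R : rcfType.
Implicit Types (P Q : pt R) (a b c K : R).

(* |P f1| for P on the ellipse, as a linear function of P.1. *)
Definition focal_radius a c P : R := a + c * P.1 / a.

(* Up to a nonzero factor, the power of X100 of the inverted triangle with
   respect to the target circle: G_i are the ell_sq of the sides, d_i the focal
   radii and y_i the ordinates of the vertices. *)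
Definition power_form (G1 G2 G3 d1 d2 d3 y1 y2 y3 : R) : R :=
  let m1 := G1 * d1 in let m2 := G2 * d2 in let m3 := G3 * d3 in
  G1 * y1 ^+ 2 * d2 * d3 * (m3 - m1) * (m1 - m2) + G2 * y2 ^+ 2 * d1 * d3 * (m1 - m2) * (m2 - m3)
  + G3 * y3 ^+ 2 * d1 * d2 * (m2 - m3) * (m3 - m1).

Definition power_numerator a b c P1 P2 P3 : R :=
  power_form (ell_sq a b P2 P3) (ell_sq a b P3 P1) (ell_sq a b P1 P2)
    (focal_radius a c P1) (focal_radius a c P2) (focal_radius a c P3) P1.2 P2.2 P3.2.

Lemma power_numerator_cyclic a b c P1 P2 P3 :
  power_numerator a b c P1 P2 P3 = power_numerator a b c P2 P3 P1.
Proof. by rewrite /power_numerator /power_form; ring. Qed.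

Lemma power_numerator_param a b c U V t2 t3 :
  a != 0 -> b != 0 -> U ^+ 2 + V ^+ 2 != 0 ->
  power_numerator a b c (ellipse_pt a b U V) (ellipse_pt a b t2 1) (ellipse_pt a b t3 1)
    * ((U ^+ 2 + V ^+ 2) * (t2 ^+ 2 + 1 ^+ 2) * (t3 ^+ 2 + 1 ^+ 2)) ^+ 4
  = 32 * b ^+ 2 * power_poly a c U V t2 t3.
Proof.
move=> a0 b0 nz; have := sqr1_neq0 t2; have := sqr1_neq0 t3; rewrite expr1n => n3 n2.
rewrite /power_numerator /power_form /ell_sq /focal_radius /ellipse_pt /power_poly /=.
by field; rewrite nz n2 n3 a0 b0.
Qed.

(* An inscribed triangle whose three sides have the same ratio
   ell_sq^2 / |side|^2 = K; by the reflection law every 3-periodic is one. *)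
Definition const_ratio_triangle a b K P1 P2 P3 : Prop :=
  [/\ on_ellipse a b P1, on_ellipse a b P2, on_ellipse a b P3,
      [/\ P1 != P2, P2 != P3 & P3 != P1] &
      [/\ ell_sq a b P2 P3 ^+ 2 = K * sqd P2 P3, ell_sq a b P3 P1 ^+ 2 = K * sqd P3 P1
        & ell_sq a b P1 P2 ^+ 2 = K * sqd P1 P2]].

Lemma const_ratio_triangle_cyclic a b K P1 P2 P3 :
  const_ratio_triangle a b K P1 P2 P3 -> const_ratio_triangle a b K P2 P3 P1.
Proof. by case=> e1 e2 e3 [n12 n23 n31] [k1 k2 k3]; split. Qed.

(* The main identity, when P2 and P3 are not the left vertex (so that they have
   parameters (t : 1)). *)
Lemma power_numerator_eq0_generic a b c K P1 P2 P3 :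
  0 < b -> 0 < c -> c < a -> c ^+ 2 = a ^+ 2 - b ^+ 2 -> 0 < K ->
  const_ratio_triangle a b K P1 P2 P3 -> P2.1 != - a -> P3.1 != - a ->
  power_numerator a b c P1 P2 P3 = 0.
Proof.
move=> b0 c0 ca hc K0 [e1 e2 e3 [n12 n23 n31] [k1 k2 k3]] x2 x3.
have a0 : 0 < a by apply: lt_trans ca.
have [a0' b0'] : a != 0 /\ b != 0 by split; apply: lt0r_neq0.
have g1 := ell_sq_gt0 a0' b0' n23; have g2 := ell_sq_gt0 a0' b0' n31.
have g3 := ell_sq_gt0 a0' b0' n12.
have [U [V [nz hP1]]] := ellipse_param_any a0 b0 e1.
move: n23 g1 g2 g3 k1 k2 k3.
rewrite hP1 (ellipse_param a0 b0 e2 x2) (ellipse_param a0 b0 e3 x3).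
set t2 := a * P2.2 / _; set t3 := a * P3.2 / _ => n23 g1 g2 g3 k1 k2 k3.
have t23 : t2 != t3 by apply: contraNneq n23 => /(congr1 (fun t => ellipse_pt a b t 1)) /eqP.
rewrite ell_sq_sym sqd_sym in g2 k2.
have c12 := chord_poly_eq0 a0' b0' hc nz (sqr1_neq0 t2) (lt0r_neq0 g3) k3.
have c13 := chord_poly_eq0 a0' b0' hc nz (sqr1_neq0 t3) (lt0r_neq0 g2) k2.
have c23 := chord_poly_eq0 a0' b0' hc (sqr1_neq0 t2) (sqr1_neq0 t3) (lt0r_neq0 g1) k1.
have := power_numerator_param c t2 t3 a0' b0' nz.
rewrite (power_poly_eq0 c0 ca K0 nz t23 c12 c13 c23) mulr0 => /eqP.
by rewrite mulf_eq0 expf_eq0 /= !mulf_eq0 (negbTE nz) !(negbTE (sqr1_neq0 _)) /= orbF => /eqP.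
Qed.

(* At most one vertex is the left vertex (-a, 0); rotate it into position P1. *)
Lemma power_numerator_eq0 a b c K P1 P2 P3 :
  0 < b -> 0 < c -> c < a -> c ^+ 2 = a ^+ 2 - b ^+ 2 -> 0 < K ->
  const_ratio_triangle a b K P1 P2 P3 -> power_numerator a b c P1 P2 P3 = 0.
Proof.
move=> b0 c0 ca hc K0 ct; have a0 : 0 < a by apply: lt_trans ca.
have ct2 := const_ratio_triangle_cyclic ct; have ct3 := const_ratio_triangle_cyclic ct2.
have [e1 e2 e3 [n12 n23 n31] _] := ct.
have vertex X Y : on_ellipse a b X -> on_ellipse a b Y -> X != Y -> X.1 = - a -> Y.1 != - a.
  move=> eX eY nXY xX; apply: contraNneq nXY => xY.
  by rewrite (ellipse_left_vertex a0 b0 eX xX) (ellipse_left_vertex a0 b0 eY xY).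
have [x2|x2] := eqVneq P2.1 (- a).
  rewrite power_numerator_cyclic; apply: (power_numerator_eq0_generic b0 c0 ca hc K0 ct2).
    exact: vertex x2.
  by apply: (vertex P2) => //; rewrite eq_sym.
have [x3|x3] := eqVneq P3.1 (- a).
  rewrite power_numerator_cyclic power_numerator_cyclic.
  apply: (power_numerator_eq0_generic b0 c0 ca hc K0 ct3); first exact: vertex x3.
  by apply: (vertex P3) => //; rewrite eq_sym.
exact: power_numerator_eq0_generic b0 c0 ca hc K0 ct x2 x3.
Qed.

End Numerator.

Section Focus.
Variable R : rcfType.
Implicit Types (P Q : pt R) (a b c rho : R).

Lemma focal_facts a b : 0 < b -> b < a ->
  let c := focal_c a b in [/\ 0 < a, 0 < c, c < a & c ^+ 2 = a ^+ 2 - b ^+ 2].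
Proof.
move=> b0 ba c; have a0 : 0 < a by apply: lt_trans ba.
have ab : 0 < a ^+ 2 - b ^+ 2 by nra.
have hc : c ^+ 2 = a ^+ 2 - b ^+ 2 by rewrite /c /focal_c sqr_sqrtr // ltW.
have c0 : 0 < c by rewrite /c /focal_c sqrtr_gt0.
by split => //; nra.
Qed.

Lemma focal_radius_gt0 a b c P :
  0 < b -> 0 < c -> c < a -> on_ellipse a b P -> 0 < focal_radius a c P.
Proof.
case: P => x y b0 c0 ca; rewrite /on_ellipse /focal_radius /= => e.
have a0 : 0 < a by apply: lt_trans ca.
have hx : x ^+ 2 <= a ^+ 2.
  have : x ^+ 2 / a ^+ 2 <= 1 by rewrite -e lerDl divr_ge0 // sqr_ge0.
  by rewrite ler_pdivrMr ?exprn_gt0 // mul1r.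
have xa : - a <= x by nra.
have -> : a + c * x / a = (a * (a - c) + c * (x + a)) / a by field; rewrite gt_eqF.
have h1 : 0 <= c * (x + a) by apply: mulr_ge0; lra.
have h2 : 0 < a * (a - c) by apply: mulr_gt0; lra.
by rewrite divr_gt0 //; lra.
Qed.

Lemma sqd_focus a b c P : a != 0 -> b != 0 -> c ^+ 2 = a ^+ 2 - b ^+ 2 -> on_ellipse a b P ->
  sqd P (- c, 0) = focal_radius a c P ^+ 2.
Proof.
case: P => x y a0 b0 hc; rewrite /on_ellipse /sqd /focal_radius /= => e.
apply/eqP; rewrite -subr_eq0.
have -> : (x - - c) ^+ 2 + (y - 0) ^+ 2 - (a + c * x / a) ^+ 2 =
  b ^+ 2 * (x ^+ 2 / a ^+ 2 + y ^+ 2 / b ^+ 2 - 1) + (c ^+ 2 - (a ^+ 2 - b ^+ 2)) * (1 - x ^+ 2 / a ^+ 2).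
  by field; rewrite a0 b0.
by rewrite e hc !subrr mulr0 mul0r addr0.
Qed.

Lemma dist_focus a b P : 0 < b -> b < a -> on_ellipse a b P ->
  dist P (focus1 a b) = focal_radius a (focal_c a b) P.
Proof.
move=> b0 ba e; have [a0 c0 ca hc] := focal_facts b0 ba.
rewrite /dist dot_diff (sqd_focus (lt0r_neq0 a0) (lt0r_neq0 b0) hc e) sqrtr_sqr gtr0_norm //.
exact: focal_radius_gt0 b0 c0 ca e.
Qed.

Lemma sqd_homothety (F P P' : pt R) (k k' : R) :
  sqd (padd F (pscale k (psub P F))) (padd F (pscale k' (psub P' F))) =
  k * k' * sqd P P' + (k ^+ 2 - k * k') * sqd P F + (k' ^+ 2 - k * k') * sqd P' F.
Proof. by rewrite /sqd /padd /pscale /psub /=; ring. Qed.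

Lemma focus_inv_dist a b rho P P' :
  0 < b -> b < a -> on_ellipse a b P -> on_ellipse a b P' ->
  dist (focus_inv a b rho P) (focus_inv a b rho P') =
  rho ^+ 2 * dist P P' / (focal_radius a (focal_c a b) P * focal_radius a (focal_c a b) P').
Proof.
move=> b0 ba e e'; have [a0 c0 ca hc] := focal_facts b0 ba.
have d0 := focal_radius_gt0 b0 c0 ca e; have d0' := focal_radius_gt0 b0 c0 ca e'.
have s := sqd_focus (lt0r_neq0 a0) (lt0r_neq0 b0) hc e.
have s' := sqd_focus (lt0r_neq0 a0) (lt0r_neq0 b0) hc e'.
rewrite /focus_inv !dist_focus // /focus1.
move: (focal_radius a (focal_c a b) P) (focal_radius a (focal_c a b) P') d0 d0' s s' => d d' d0 d0' s s'.
rewrite {1}/dist dot_diff sqd_homothety s s'.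
have -> : (rho / d) ^+ 2 * (rho / d') ^+ 2 * sqd P P'
    + ((rho / d) ^+ 2 ^+ 2 - (rho / d) ^+ 2 * (rho / d') ^+ 2) * d ^+ 2
    + ((rho / d') ^+ 2 ^+ 2 - (rho / d) ^+ 2 * (rho / d') ^+ 2) * d' ^+ 2
  = (rho ^+ 2 / (d * d')) ^+ 2 * sqd P P' by field; rewrite !gt_eqF.
rewrite sqrtrM ?sqr_ge0 // sqrtr_sqr -dot_diff -/(dist P P') ger0_norm; first by rewrite mulrAC.
by rewrite divr_ge0 ?sqr_ge0 // mulr_ge0 ?ltW.
Qed.

Definition power (C : pt R) r (Z : pt R) : R := (Z.1 - C.1) ^+ 2 + (Z.2 - C.2) ^+ 2 - r ^+ 2.

Lemma focus_inv_power a b rho P : 0 < b -> b < a -> on_ellipse a b P ->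
  let c := focal_c a b in
  power (- c * (1 + rho ^+ 2 / b ^+ 2), 0) (rho ^+ 2 * a / b ^+ 2) (focus_inv a b rho P)
  = rho ^+ 4 * c ^+ 2 / b ^+ 4 * P.2 ^+ 2 / focal_radius a c P ^+ 2.
Proof.
move=> b0 ba e c; have [a0 c0 ca hc] := focal_facts b0 ba.
have /lt0r_neq0 d0 := focal_radius_gt0 b0 c0 ca e.
have s := sqd_focus (lt0r_neq0 a0) (lt0r_neq0 b0) hc e.
rewrite /focus_inv dist_focus // /focus1 -/c.
move: e d0 s; rewrite /on_ellipse; move: (focal_radius a c P) => d.
case: P => x y /= e d0 s; apply/eqP; rewrite -subr_eq0; apply/eqP.
transitivity (rho ^+ 4 / (b ^+ 4 * d ^+ 4) * (b ^+ 4 * (sqd (x, y) (- c, 0) - d ^+ 2)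
  + d ^+ 2 * ((c ^+ 2 - a ^+ 2 + b ^+ 2) * (d ^+ 2 + b ^+ 2 - y ^+ 2)
              - b ^+ 2 * (d ^+ 2 - sqd (x, y) (- c, 0))
              - a ^+ 2 * b ^+ 2 * (x ^+ 2 / a ^+ 2 + y ^+ 2 / b ^+ 2 - 1)))).
  rewrite /power /sqd /padd /pscale /psub /=.
  by field; rewrite d0 !gt_eqF.
by rewrite s e hc !subrr; ring.
Qed.

End Focus.

Section Barycentric.
Variable R : rcfType.
Implicit Types (C : pt R) (x y z r : R).

Definition schur x y z : R := x * (x - y) * (x - z) + y * (y - x) * (y - z) + z * (z - x) * (z - y).

Lemma schur_gt0_sorted x y z : 0 <= z -> z < y -> y < x -> 0 < schur x y z.
Proof.
move=> z0 zy yx.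
have -> : schur x y z = (x - y) ^+ 2 * (x + y - z) + z * ((x - z) * (y - z)) by rewrite /schur; ring.
have hA : 0 < (x - y) ^+ 2 * (x + y - z) by rewrite mulr_gt0 ?exprn_gt0 ?subr_gt0 //; lra.
have hB : 0 <= z * ((x - z) * (y - z)) by rewrite !mulr_ge0 //; lra.
lra.
Qed.

Lemma schur_gt0 x y z : 0 <= x -> 0 <= y -> 0 <= z -> x != y -> y != z -> z != x -> 0 < schur x y z.
Proof.
move=> x0 y0 z0 xy yz zx.
have s1 : schur x y z = schur x z y by rewrite /schur; ring.
have s2 : schur x y z = schur y x z by rewrite /schur; ring.
have s3 : schur x y z = schur y z x by rewrite /schur; ring.
have s4 : schur x y z = schur z x y by rewrite /schur; ring.
have s5 : schur x y z = schur z y x by rewrite /schur; ring.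
case/lt_total/orP: xy => hxy; case/lt_total/orP: yz => hyz; case/lt_total/orP: zx => hzx.
all: first [by exfalso; lra | by apply: schur_gt0_sorted
  | by rewrite s1; apply: schur_gt0_sorted | by rewrite s2; apply: schur_gt0_sorted
  | by rewrite s3; apply: schur_gt0_sorted | by rewrite s4; apply: schur_gt0_sorted
  | by rewrite s5; apply: schur_gt0_sorted].
Qed.

(* Power of a point given by (unnormalised) barycentrics u1 : u2 : u3; the
   correction term vanishes exactly when the point is on the circumcircle. *)
Lemma bary_power (Q1 Q2 Q3 : pt R) C r (u1 u2 u3 : R) : u1 + u2 + u3 != 0 ->
  power C r (from_bary Q1 Q2 Q3 u1 u2 u3) =
  (u1 * power C r Q1 + u2 * power C r Q2 + u3 * power C r Q3) / (u1 + u2 + u3)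
  - (u2 * u3 * sqd Q2 Q3 + u3 * u1 * sqd Q3 Q1 + u1 * u2 * sqd Q1 Q2) / (u1 + u2 + u3) ^+ 2.
Proof. by move=> nz; rewrite /power /from_bary /sqd /padd /pscale /=; field. Qed.

(* X100 lies on the circumcircle, so its power with respect to any circle is the
   weighted mean of the powers of the vertices.  The weights have nonzero sum
   by Schur's inequality. *)
Lemma X100_power (Q1 Q2 Q3 : pt R) C r :
  let sa := sideA Q1 Q2 Q3 in let sb := sideB Q1 Q2 Q3 in let sc := sideC Q1 Q2 Q3 in
  sa != sb -> sb != sc -> sc != sa ->
  power C r (X100 Q1 Q2 Q3) =
  (sa / (sb - sc) * power C r Q1 + sb / (sc - sa) * power C r Q2 + sc / (sa - sb) * power C r Q3)
  / (sa / (sb - sc) + sb / (sc - sa) + sc / (sa - sb)).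
Proof.
move=> sa sb sc ab bc ca.
have ha : sa ^+ 2 = sqd Q2 Q3 by exact: dist_sq.
have hb : sb ^+ 2 = sqd Q3 Q1 by exact: dist_sq.
have hc : sc ^+ 2 = sqd Q1 Q2 by exact: dist_sq.
have a0 : 0 <= sa by exact: sqrtr_ge0.
have b0 : 0 <= sb by exact: sqrtr_ge0.
have c0 : 0 <= sc by exact: sqrtr_ge0.
rewrite /X100 -/sa -/sb -/sc; clearbody sa sb sc.
have [ab' bc' ca'] : [/\ sa - sb != 0, sb - sc != 0 & sc - sa != 0] by rewrite !subr_eq0.
have S0 : sa / (sb - sc) + sb / (sc - sa) + sc / (sa - sb) != 0.
  have id : (sa / (sb - sc) + sb / (sc - sa) + sc / (sa - sb)) * ((sb - sc) * (sc - sa) * (sa - sb))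
         = - schur sa sb sc by rewrite /schur; field; rewrite ab' bc' ca'.
  apply/eqP => S0; have := schur_gt0 a0 b0 c0 ab bc ca.
  by rewrite -oppr_lt0 -id S0 mul0r ltxx.
have circ : sb / (sc - sa) * (sc / (sa - sb)) * sa ^+ 2 + sc / (sa - sb) * (sa / (sb - sc)) * sb ^+ 2
    + sa / (sb - sc) * (sb / (sc - sa)) * sc ^+ 2 = 0.
  by field; rewrite ab' bc' ca'.
by rewrite bary_power // -ha -hb -hc circ mul0r subr0.
Qed.

End Barycentric.

Section Assembly.
Variable R : rcfType.

Lemma power_form_weights (k mu G1 G2 G3 d1 d2 d3 y1 y2 y3 : R) :
  k != 0 -> d1 != 0 -> d2 != 0 -> d3 != 0 ->
  let s1 := k * G1 / (d2 * d3) in let s2 := k * G2 / (d3 * d1) in let s3 := k * G3 / (d1 * d2) in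
  s1 != s2 -> s2 != s3 -> s3 != s1 -> power_form G1 G2 G3 d1 d2 d3 y1 y2 y3 = 0 ->
  s1 / (s2 - s3) * (mu * y1 ^+ 2 / d1 ^+ 2) + s2 / (s3 - s1) * (mu * y2 ^+ 2 / d2 ^+ 2)
  + s3 / (s1 - s2) * (mu * y3 ^+ 2 / d3 ^+ 2) = 0.
Proof.
move=> k0 d10 d20 d30 s1 s2 s3 n12 n23 n31 form0.
pose m1 := G1 * d1; pose m2 := G2 * d2; pose m3 := G3 * d3.
have scale (si sj mi mj : R) : si - sj = k / (d1 * d2 * d3) * (mi - mj) -> si != sj -> mi - mj != 0.
  by move=> e; rewrite -subr_eq0 e mulf_eq0 negb_or => /andP[].
have m12 : m1 - m2 != 0 by apply: (scale s1 s2) n12; rewrite /s1 /s2 /m1 /m2; field; rewrite d10 d20 d30.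
have m23 : m2 - m3 != 0 by apply: (scale s2 s3) n23; rewrite /s2 /s3 /m2 /m3; field; rewrite d10 d20 d30.
have m31 : m3 - m1 != 0 by apply: (scale s3 s1) n31; rewrite /s3 /s1 /m3 /m1; field; rewrite d10 d20 d30.
transitivity (mu * power_form G1 G2 G3 d1 d2 d3 y1 y2 y3 / (d1 * d2 * d3 * ((m2 - m3) * (m3 - m1) * (m1 - m2)))); last first.
  by rewrite form0 mulr0 mul0r.
have km (Gi di Gj dj : R) : Gi * di - Gj * dj != 0 -> k * Gi * di + - (k * Gj) * dj != 0.
  by move=> h; rewrite (_ : _ + _ = k * (Gi * di - Gj * dj)) ?mulf_neq0 //; ring.
rewrite /s1 /s2 /s3 /power_form -/m1 -/m2 -/m3; rewrite /m1 /m2 /m3 in m12 m23 m31 *.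
by field; rewrite m12 m23 m31 d10 d20 d30 (km _ _ _ _ m12) (km _ _ _ _ m23) (km _ _ _ _ m31).
Qed.

Lemma focus_inv_side a b rho J (P P' : pt R) :
  0 < b -> b < a -> on_ellipse a b P -> on_ellipse a b P' -> 0 < J ->
  ell_sq a b P P' = J * dist P P' ->
  dist (focus_inv a b rho P) (focus_inv a b rho P') =
  rho ^+ 2 / J * ell_sq a b P P' / (focal_radius a (focal_c a b) P * focal_radius a (focal_c a b) P').
Proof.
move=> b0 ba e e' J0 hJ; have [a0 c0 ca hc] := focal_facts b0 ba.
have d0 := focal_radius_gt0 b0 c0 ca e; have d0' := focal_radius_gt0 b0 c0 ca e'.
by rewrite focus_inv_dist // hJ; field; rewrite !gt_eqF.
Qed.

Lemma three_periodic_const_ratio a b J (P1 P2 P3 : pt R) :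
  three_periodic a b P1 P2 P3 ->
  [/\ ell_sq a b P2 P3 = J * dist P2 P3, ell_sq a b P3 P1 = J * dist P3 P1
    & ell_sq a b P1 P2 = J * dist P1 P2] ->
  const_ratio_triangle a b (J ^+ 2) P1 P2 P3.
Proof.
case=> e1 e2 e3 [/eqP n12 /eqP n23 /eqP n31] _ [h23 h31 h12].
by split=> //; split; rewrite ?h23 ?h31 ?h12 exprMn dist_sq.
Qed.

End Assembly.

Unset Implicit Arguments.
Theorem mainTheorem16 (R : rcfType) (a b rho : R) (P1 P2 P3 : pt R) :
  0 < b -> b < a -> 0 < rho ->
  three_periodic a b P1 P2 P3 ->
  let Q1 := focus_inv a b rho P1 in
  let Q2 := focus_inv a b rho P2 in
  let Q3 := focus_inv a b rho P3 in
  sideA Q1 Q2 Q3 != sideB Q1 Q2 Q3 ->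
  sideB Q1 Q2 Q3 != sideC Q1 Q2 Q3 ->
  sideC Q1 Q2 Q3 != sideA Q1 Q2 Q3 ->
  let X := X100 Q1 Q2 Q3 in
  let c := focal_c a b in
  (X.1 - (- c * (1 + rho ^+ 2 / b ^+ 2))) ^+ 2 + X.2 ^+ 2
    = (rho ^+ 2 * a / b ^+ 2) ^+ 2.
Proof.
move=> b0 ba r0 tp Q1 Q2 Q3 sAB sBC sCA X c.
have [a0 c0 ca hc] := focal_facts b0 ba.
have [e1 e2 e3 _ _] := tp.
have [J J0 hJ] := three_periodic_ratio a0 b0 tp.
have num0 : power_numerator a b c P1 P2 P3 = 0.
  exact: power_numerator_eq0 b0 c0 ca hc (exprn_gt0 2 J0) (three_periodic_const_ratio tp hJ).
have [h23 h31 h12] := hJ.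
have sA := focus_inv_side rho b0 ba e2 e3 J0 h23.
have sB := focus_inv_side rho b0 ba e3 e1 J0 h31.
have sC := focus_inv_side rho b0 ba e1 e2 J0 h12.
have fr P : on_ellipse a b P -> focal_radius a c P != 0.
  by move=> e; rewrite gt_eqF // (focal_radius_gt0 b0 c0 ca e).
suff : power (- c * (1 + rho ^+ 2 / b ^+ 2), 0) (rho ^+ 2 * a / b ^+ 2) X = 0.
  by rewrite /power /= subr0 => /eqP; rewrite subr_eq0 => /eqP.
rewrite /X X100_power //; rewrite /sideA /sideB /sideC in sAB sBC sCA *.
rewrite sA sB sC !focus_inv_power // -/c in sAB sBC sCA *.
by rewrite power_form_weights ?mul0r ?fr // mulf_neq0 ?invr_eq0 ?expf_neq0 ?gt_eqF.
Qed.
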